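(* The outer structural $\lambda$-calculus $\lambda j_{\tt out}$ enjoys PSN: every $\lambda$-term that is $\beta$-strongly normalizing is strongly normalizing for $\to_{\lambda j_{\tt out}}$.
   Context: $\lambda j$-terms are generated by $t,u::= x\mid \lambda x.t\mid t\,u\mid t[x/u]$; $\lambda x.t$ and $t[x/u]$ bind $x$ in $t$ (not in $u$), and terms are considered modulo $\alpha$-conversion. $\lambda$-terms are those without jumps. $\mathrm{fv}(t)$ is the set of free variables, $t\{x/u\}$ is capture-avoiding meta-level substitution, and $|t|_x$ is the number of free occurrences of $x$ in $t$. If $|t|_x=n\ge2$, $t_{[y]_x}$ denotes any term obtained from $t$ by replacing $k$ of the free occurrences of $x$ by a fresh variable $y$, for some $1\le k\le n-1$. ${\tt L}$ denotes a (possibly empty) list of jumps $[x_1/u_1]\dots[x_k/u_k]$. The calculus $\lambda j_{\tt out}$ has the following rules closed under all contexts: $({\tt dB})$ $(\lambda x.t){\tt L}\,u\to t[x/u]{\tt L}$ where no $x_i$ of ${\tt L}$ is free in $u$; $({\tt w})$ $t[x/u]\to t$ if $|t|_x=0$; $({\tt d})$ $t[x/u]\to t\{x/u\}$ if $|t|_x=1$; $({\tt c})$ $t[x/u]\to t_{[y]_x}[x/u][y/u]$ if $|t|_x\ge2$, $y$ fresh; $({\tt out}_1)$ $\lambda y.(t[x/u])\to(\lambda y.t)[x/u]$ if $y\notin\mathrm{fv}(u)$; $({\tt out}_2)$ $t[x/u]\,v\to(t\,v)[x/u]$ (with $x\notin\mathrm{fv}(v)$ by $\alpha$); $({\tt out}_3)$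 $t\,(v[x/u])\to(t\,v)[x/u]$ (with $x\notin\mathrm{fv}(t)$ by $\alpha$); $({\tt out}_4)$ $t[y/v[x/u]]\to t[y/v][x/u]$ (with $x\notin\mathrm{fv}(t)$, $x\neq y$ by $\alpha$); all taken modulo $\equiv_{\tt CS}$, the smallest equivalence closed under contexts containing $t[x/s][y/v]\sim t[y/v][x/s]$ if $x\notin\mathrm{fv}(v)$ and $y\notin\mathrm{fv}(s)$. $\beta$-reduction is the contextual closure of $(\lambda x.t)u\to t\{x/u\}$. *)

(* lambda-j terms modulo alpha-conversion are represented with
   de Bruijn indices. *)
From Stdlib Require Import Arith List Relations.
Import ListNotations.

(* Var n | Lam t (binds 0 in t) | App t u | Sub t u = t[x/u] (binds 0 in t, not in u) *)
Inductive term : Type :=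
| Var (n : nat)
| Lam (t : term)
| App (t u : term)
| Sub (t u : term).

Fixpoint is_lambda (t : term) : Prop :=
  match t with
  | Var _ => True
  | Lam t => is_lambda t
  | App t u => is_lambda t /\ is_lambda u
  | Sub _ _ => False
  end.

Definition upren (f : nat -> nat) (n : nat) : nat :=
  match n with 0 => 0 | S m => S (f m) end.

Fixpoint rename (f : nat -> nat) (t : term) : term :=
  match t with
  | Var n => Var (f n)
  | Lam t => Lam (rename (upren f) t)
  | App t u => App (rename f t) (rename f u)
  | Sub t u => Sub (rename (upren f) t) (rename f u)
  end.

Definition lift (t : term) : term := rename S t.
Fixpoint liftn (k : nat) (t : term) : term :=
  match k with 0 => t | S k => lift (liftn k t) end.

Definition swap01 (n : nat) : nat :=
  match n with 0 => 1 | 1 => 0 | _ => n end.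

Definition up (sigma : nat -> term) (n : nat) : term :=
  match n with 0 => Var 0 | S m => lift (sigma m) end.

Fixpoint inst (sigma : nat -> term) (t : term) : term :=
  match t with
  | Var n => sigma n
  | Lam t => Lam (inst (up sigma) t)
  | App t u => App (inst sigma t) (inst sigma u)
  | Sub t u => Sub (inst (up sigma) t) (inst sigma u)
  end.

Definition beta_sub (u : term) (n : nat) : term :=
  match n with 0 => u | S m => Var m end.

Definition subst0 (t u : term) : term := inst (beta_sub u) t.

(* occ d t = number of free occurrences of index d in t  (|t|_x) *)
Fixpoint occ (d : nat) (t : term) : nat :=
  match t with
  | Var n => if Nat.eqb n d then 1 else 0
  | Lam t => occ (S d) t
  | App t u => occ d t + occ d u
  | Sub t u => occ (S d) t + occ d u
  end.

(* split_occ d t t' : t' is obtained from t by inserting a fresh variable y at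
   index d+1 (just above x = index d) and replacing SOME of the occurrences of x
   by y (each occurrence of x is either kept or renamed). *)
Inductive split_occ : nat -> term -> term -> Prop :=
| sp_keep d : split_occ d (Var d) (Var d)
| sp_ren d : split_occ d (Var d) (Var (S d))
| sp_lt d n : n < d -> split_occ d (Var n) (Var n)
| sp_gt d n : d < n -> split_occ d (Var n) (Var (S n))
| sp_lam d t t' : split_occ (S d) t t' -> split_occ d (Lam t) (Lam t')
| sp_app d t t' u u' :
    split_occ d t t' -> split_occ d u u' -> split_occ d (App t u) (App t' u')
| sp_sub d t t' u u' :
    split_occ (S d) t t' -> split_occ d u u' -> split_occ d (Sub t u) (Sub t' u').

(* t L  with L = [u1; ...; uk] denotes t[x1/u1]...[xk/uk] *)
Definition apply_L (t : term) (L : list term) : term :=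
  fold_left (fun acc u => Sub acc u) L t.

Inductive out_root : term -> term -> Prop :=
| r_dB t L u :
    out_root (App (apply_L (Lam t) L) u) (apply_L (Sub t (liftn (length L) u)) L)
| r_w t u : out_root (Sub (lift t) u) t            (* |t|_x = 0 *)
| r_d t u : occ 0 t = 1 -> out_root (Sub t u) (subst0 t u)
| r_c t t' u :
    2 <= occ 0 t -> split_occ 0 t t' -> 1 <= occ 0 t' -> 1 <= occ 1 t' ->
    (* t_[y]_x [x/u][y/u] : index 0 = x, index 1 = y in t' *)
    out_root (Sub t u) (Sub (Sub t' (lift u)) u)
| r_out1 t u :  (* lam y.(t[x/u]) -> (lam y.t)[x/u], y notin fv(u) *)
    out_root (Lam (Sub t (lift u))) (Sub (Lam (rename swap01 t)) u)
| r_out2 t u v : out_root (App (Sub t u) v) (Sub (App t (lift v)) u)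
| r_out3 t u v : out_root (App t (Sub v u)) (Sub (App (lift t) v) u)
| r_out4 t u v :  (* t[y/v[x/u]] -> t[y/v][x/u] *)
    out_root (Sub t (Sub v u)) (Sub (Sub (rename (upren S) t) v) u).

Inductive beta_root : term -> term -> Prop :=
| r_beta t u : beta_root (App (Lam t) u) (subst0 t u).

Inductive ctx (R : term -> term -> Prop) : term -> term -> Prop :=
| c_root t s : R t s -> ctx R t s
| c_lam t s : ctx R t s -> ctx R (Lam t) (Lam s)
| c_appl t s u : ctx R t s -> ctx R (App t u) (App s u)
| c_appr u t s : ctx R t s -> ctx R (App u t) (App u s)
| c_subl t s u : ctx R t s -> ctx R (Sub t u) (Sub s u)
| c_subr u t s : ctx R t s -> ctx R (Sub u t) (Sub u s).

(* t[x/s][y/v] ~ t[y/v][x/s] if x notin fv(v), y notin fv(s) *)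
Inductive cs_root : term -> term -> Prop :=
| r_cs t s v :
    cs_root (Sub (Sub t (lift s)) v) (Sub (Sub (rename swap01 t) (lift v)) s).

Definition cs_eq : term -> term -> Prop := clos_refl_sym_trans term (ctx cs_root).

Definition red_jout : term -> term -> Prop := ctx out_root.
Definition red_beta : term -> term -> Prop := ctx beta_root.

Definition red_jout_mod (t s : term) : Prop :=
  exists t' s', cs_eq t t' /\ red_jout t' s' /\ cs_eq s' s.

Definition SN (R : term -> term -> Prop) (t : term) : Prop :=
  Acc (fun a b => R b a) t.

From Stdlib Require Import Arith List Relations Permutation Lia Morphisms Wellfounded.
Import ListNotations.

(* Types are [Base] and arrows [Arr M s] whose source M is a finite multiset of types
   (non-idempotent intersection types); a typing context assigns a multiset of types to
   every de Bruijn index.  The judgement [ty B G t s N W] carries two measures: a size N,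
   counting the variable, abstraction and application nodes of the typing derivation, and
   a weight W, to which every jump [t[x/u]] contributes [jump_weight |L|] (L being the
   multiset of types given to the copies of u), and in which everything below an
   abstraction, an application or inside the argument of a jump is multiplied by B.

   The size N does not depend on B, so the typing can
     be redone with B > 3N, which gives the theorem [corollary55]. *)

(* Types; equality is decidable, so permutations can be checked by counting occurrences. *)
Inductive typ := Base | Arr (M : list typ) (t : typ).

Definition typ_eq_dec : forall x y : typ, {x = y} + {x <> y}.
Proof. fix IH 1. intros x y. decide equality. apply (list_eq_dec IH). Defined.

Ltac perm_solve :=
  apply (proj2 (Permutation_count_occ typ_eq_dec _ _));
  let x := fresh "x" in intro x;
  repeat match goal with H : Permutation _ _ |- _ =>
     apply (proj1 (Permutation_count_occ typ_eq_dec _ _)) in H; specialize (H x) end;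
  repeat rewrite count_occ_app in *; simpl in *; lia.

Definition subm (M L : list typ) := exists R, Permutation L (M ++ R).

Lemma subm_refl M : subm M M. Proof. exists []; rewrite app_nil_r; reflexivity. Qed.
Lemma subm_trans A B C : subm A B -> subm B C -> subm A C.
Proof. intros [R1 H1] [R2 H2]. exists (R1 ++ R2). rewrite H2, H1, app_assoc. reflexivity. Qed.
Lemma subm_perm_l A A' B : Permutation A A' -> subm A B -> subm A' B.
Proof. intros P [R H]. exists R. rewrite H, P. reflexivity. Qed.
Lemma subm_perm_r A B B' : Permutation B B' -> subm A B -> subm A B'.
Proof. intros P [R H]. exists R. rewrite <- P. exact H. Qed.
Lemma subm_app A B C D : subm A B -> subm C D -> subm (A ++ C) (B ++ D).
Proof. intros [R1 H1] [R2 H2]. exists (R1 ++ R2). rewrite H1, H2. perm_solve. Qed.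
Lemma subm_nil A : subm [] A. Proof. exists A. reflexivity. Qed.
Lemma subm_appr A B : subm A (A ++ B). Proof. exists B. reflexivity. Qed.

Definition tctx := nat -> list typ.
Definition ceq (G D : tctx) := forall n, Permutation (G n) (D n).
Definition cplus (G D : tctx) : tctx := fun n => G n ++ D n.
Definition cempty : tctx := fun _ => [].
Definition csubm (G D : tctx) := forall n, subm (G n) (D n).
Definition ctail (G : tctx) : tctx := fun n => G (S n).
Definition scons (M : list typ) (G : tctx) : tctx :=
  fun n => match n with 0 => M | S m => G m end.
Definition csingle (k : nat) (l : list typ) : tctx := fun n => if Nat.eqb n k then l else [].

Lemma ceq_refl G : ceq G G. Proof. intro; reflexivity. Qed.
Lemma ceq_sym G D : ceq G D -> ceq D G. Proof. intros H n; symmetry; apply H. Qed.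
Lemma ceq_trans G D E : ceq G D -> ceq D E -> ceq G E.
Proof. intros H1 H2 n; etransitivity; [apply H1|apply H2]. Qed.
#[global] Instance ceq_equiv : Equivalence ceq.
Proof. split; [exact ceq_refl|exact ceq_sym|exact ceq_trans]. Qed.

Lemma csubm_refl G : csubm G G. Proof. intro; apply subm_refl. Qed.
Lemma csubm_ceq G D : ceq G D -> csubm G D.
Proof. intros H n. exists []. rewrite app_nil_r, (H n). reflexivity. Qed.
Lemma csubm_plus A A' C C' : csubm A' A -> csubm C' C -> csubm (cplus A' C') (cplus A C).
Proof. intros H1 H2 n; unfold cplus; apply subm_app; auto. Qed.
Lemma csubm_tail A A' : csubm A' A -> csubm (ctail A') (ctail A).
Proof. intros H n; apply H. Qed.
Lemma csubm_ceq_r A C C' : csubm A C -> ceq C C' -> csubm A C'.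
Proof. intros H E n; eapply subm_perm_r; [apply E|apply H]. Qed.
Lemma csubm_empty A : csubm cempty A.
Proof. intro n; apply subm_nil. Qed.

(* Contexts of terms obtained by lifting under k binders ([shiftc]), by exchanging the
   indices 0 and 1 ([cswap]), by inserting a fresh index 1 ([cins1]), and after
   substituting index k ([dropk]). *)
Definition shiftc (k : nat) (D : tctx) : tctx :=
  fun n => if Nat.ltb n k then [] else D (n - k).
Definition cswap (G : tctx) : tctx := fun n => G (swap01 n).
Definition cins1 (G : tctx) : tctx :=
  fun n => match n with 0 => G 0 | 1 => [] | S (S m) => G (S m) end.
Definition dropk (k : nat) (G : tctx) : tctx :=
  fun n => if Nat.ltb n k then G n else G (S n).

#[global] Instance cplus_proper : Proper (ceq ==> ceq ==> ceq) cplus.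
Proof. intros A A' EA C C' EC n; unfold cplus; rewrite (EA n), (EC n); reflexivity. Qed.
#[global] Instance ctail_proper : Proper (ceq ==> ceq) ctail.
Proof. intros A A' EA n; apply EA. Qed.
#[global] Instance shiftc_proper k : Proper (ceq ==> ceq) (shiftc k).
Proof. intros A A' EA n; unfold shiftc; destruct (Nat.ltb n k); auto. Qed.
#[global] Instance dropk_proper k : Proper (ceq ==> ceq) (dropk k).
Proof. intros A A' EA n; unfold dropk; destruct (Nat.ltb n k); auto. Qed.

Lemma ctail_plus A C : ceq (ctail (cplus A C)) (cplus (ctail A) (ctail C)).
Proof. intro; reflexivity. Qed.
Lemma dropk_plus k A C : ceq (dropk k (cplus A C)) (cplus (dropk k A) (dropk k C)).
Proof. intro n; unfold dropk, cplus; destruct (Nat.ltb n k); reflexivity. Qed.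
Lemma shiftc_plus k A C : ceq (shiftc k (cplus A C)) (cplus (shiftc k A) (shiftc k C)).
Proof. intro n; unfold shiftc, cplus; destruct (Nat.ltb n k); reflexivity. Qed.
Lemma shiftc_empty k : ceq (shiftc k cempty) cempty.
Proof. intro n; unfold shiftc, cempty; destruct (Nat.ltb n k); reflexivity. Qed.
Lemma dropk_empty k : ceq (dropk k cempty) cempty.
Proof. intro n; unfold dropk, cempty; destruct (Nat.ltb n k); reflexivity. Qed.
Lemma ctail_dropk k G : ceq (ctail (dropk (S k) G)) (dropk k (ctail G)).
Proof. intro; reflexivity. Qed.
Lemma ctail_shiftc k G : ceq (ctail (shiftc (S k) G)) (shiftc k G).
Proof. intro; reflexivity. Qed.
Lemma cplus_empty_r A : ceq (cplus A cempty) A.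
Proof. intro n; unfold cplus, cempty; rewrite app_nil_r; reflexivity. Qed.
Lemma shiftc_S k D : ceq (shiftc (S k) D) (scons [] (shiftc k D)).
Proof. intros [|n]; unfold shiftc; simpl; reflexivity. Qed.
Lemma shiftc_0 D : ceq (shiftc 0 D) D.
Proof. intro n; unfold shiftc; simpl; rewrite Nat.sub_0_r; reflexivity. Qed.

Ltac ctx_solve := intro; unfold cplus, cempty, ctail; perm_solve.

Definition ren_ctx (f : nat -> nat) (G G' : tctx) :=
  (forall n, Permutation (G' (f n)) (G n)) /\ (forall m, (forall n, f n <> m) -> G' m = []).
Definition injective (f : nat -> nat) := forall a b, f a = f b -> a = b.

Lemma injective_upren f : injective f -> injective (upren f).
Proof. intros H [|a] [|b]; simpl; intro E; try discriminate; auto. Qed.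
Lemma injective_S : injective S. Proof. intros a b H; injection H; auto. Qed.
Lemma injective_swap01 : injective swap01.
Proof. intros [|[|a]] [|[|b]]; simpl; intro H; try discriminate; auto. Qed.

Lemma ren_ctx_ceq f G D G' : ceq G D -> ren_ctx f D G' -> ren_ctx f G G'.
Proof. intros E [H1 H2]; split; auto. intro n; rewrite H1, (E n); reflexivity. Qed.
Lemma ren_ctx_ceq' f G G' D' : ceq G' D' -> ren_ctx f G D' -> ren_ctx f G G'.
Proof. intros E [H1 H2]; split. intro n; rewrite (E (f n)); auto.
  intros m Hm. specialize (E m). rewrite (H2 m Hm) in E. apply Permutation_nil; symmetry; auto. Qed.
Lemma ren_ctx_empty f : ren_ctx f cempty cempty.
Proof. split; reflexivity. Qed.
Lemma ren_ctx_plus f G1 G2 D1 D2 :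
  ren_ctx f G1 D1 -> ren_ctx f G2 D2 -> ren_ctx f (cplus G1 G2) (cplus D1 D2).
Proof. intros [A1 B1] [A2 B2]; split; unfold cplus. intro n; rewrite A1, A2; reflexivity.
  intros m Hm; rewrite B1, B2; auto. Qed.
Lemma ren_ctx_single f n l : injective f -> ren_ctx f (csingle n l) (csingle (f n) l).
Proof. intro Hf; split; unfold csingle.
  - intro k. destruct (Nat.eqb_spec (f k) (f n)), (Nat.eqb_spec k n); subst; try reflexivity.
    apply Hf in e; contradiction. contradiction.
  - intros m Hm. destruct (Nat.eqb_spec m (f n)); subst; auto. exfalso; apply (Hm n); auto.
Qed.
Lemma ren_ctx_tail f G G' : ren_ctx (upren f) G G' -> ren_ctx f (ctail G) (ctail G').
Proof. intros [A C]; split; unfold ctail. intro n; apply (A (S n)).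
  intros m Hm. apply C. intros [|k]; simpl; try discriminate. intro E; injection E; apply Hm. Qed.
Lemma ren_ctx_zero f G G' : ren_ctx (upren f) G G' -> Permutation (G' 0) (G 0).
Proof. intros [A _]; apply (A 0). Qed.

Lemma ren_ctx_S G G' : ren_ctx S G G' -> ceq G' (scons [] G).
Proof. intros [A C] [|n]; simpl. rewrite C; [auto | intros k; discriminate]. apply A. Qed.
Lemma ren_ctx_swap G G' : ren_ctx swap01 G G' -> ceq G' (cswap G).
Proof. intros [A C] n. unfold cswap. rewrite <- (A (swap01 n)).
  destruct n as [|[|n]]; reflexivity. Qed.
Lemma ren_ctx_uprenS G G' : ren_ctx (upren S) G G' -> ceq G' (cins1 G).
Proof. intros [A C] [|[|n]]; simpl. apply (A 0). rewrite C; [auto|].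
  intros [|k]; simpl; discriminate. apply (A (S n)). Qed.

(* [split_ctx k G G']: G' arises from G by inserting index k+1 and distributing the
   multiset of index k between k and k+1 (the context effect of [split_occ k]). *)
Definition split_ctx (k : nat) (G G' : tctx) :=
  Permutation (G' k ++ G' (S k)) (G k) /\ (forall n, n < k -> Permutation (G' n) (G n)) /\
  (forall n, k < n -> Permutation (G' (S n)) (G n)).

Lemma split_ctx_ceq k G D G' : ceq G D -> split_ctx k D G' -> split_ctx k G G'.
Proof. intros E (A & C & F); repeat split; intros; rewrite (E _); auto. Qed.
Lemma split_ctx_empty k : split_ctx k cempty cempty.
Proof. repeat split; intros; reflexivity. Qed.
Lemma split_ctx_plus k G1 G2 D1 D2 :
  split_ctx k G1 D1 -> split_ctx k G2 D2 -> split_ctx k (cplus G1 G2) (cplus D1 D2).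
Proof. intros (A1 & C1 & F1) (A2 & C2 & F2); unfold cplus; repeat split; intros.
  rewrite <- A1, <- A2; perm_solve. rewrite C1, C2; auto. rewrite F1, F2; auto. Qed.
Lemma split_ctx_tail k G G' : split_ctx (S k) G G' -> split_ctx k (ctail G) (ctail G').
Proof. intros (A & C & F); unfold ctail; repeat split; intros; auto.
  apply C; lia. apply F; lia. Qed.
Lemma split_ctx_zero k G G' : split_ctx (S k) G G' -> Permutation (G' 0) (G 0).
Proof. intros (A & C & F); apply C; lia. Qed.

Fixpoint subst_at (k : nat) (u t : term) : term :=
  match t with
  | Var n => if Nat.ltb n k then Var n else if Nat.eqb n k then liftn k u else Var (pred n)
  | Lam t => Lam (subst_at (S k) u t)
  | App a b => App (subst_at k u a) (subst_at k u b)
  | Sub a b => Sub (subst_at (S k) u a) (subst_at k u b)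
  end.

Fixpoint upn (k : nat) (s : nat -> term) : nat -> term :=
  match k with 0 => s | S k => up (upn k s) end.

Lemma upn_beta_sub k u n : upn k (beta_sub u) n =
  if Nat.ltb n k then Var n else if Nat.eqb n k then liftn k u else Var (pred n).
Proof.
  revert n; induction k; intro n.
  - destruct n; reflexivity.
  - destruct n as [|m]; simpl. reflexivity. rewrite IHk.
    destruct (Nat.ltb_spec m k), (Nat.eqb_spec m k), (Nat.ltb_spec (S m) (S k)); simpl;
      try (exfalso; lia); try reflexivity.
    unfold lift; simpl. f_equal. lia.
Qed.

Lemma inst_upn k u t : inst (upn k (beta_sub u)) t = subst_at k u t.
Proof.
  revert k; induction t; intro k; simpl.
  - apply upn_beta_sub.
  - f_equal. apply (IHt (S k)).
  - f_equal; auto.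
  - f_equal. apply (IHt1 (S k)). auto.
Qed.

Lemma subst0_at t u : subst0 t u = subst_at 0 u t.
Proof. apply (inst_upn 0). Qed.

Lemma liftn_lift k u : liftn k (lift u) = lift (liftn k u).
Proof. induction k; simpl; auto. rewrite IHk; auto. Qed.

Lemma apply_L_snoc t l v : apply_L t (l ++ [v]) = Sub (apply_L t l) v.
Proof. unfold apply_L; rewrite fold_left_app; reflexivity. Qed.

Lemma rename_inv f g t : (forall n, f (g n) = n) -> rename f (rename g t) = t.
Proof.
  assert (Hu : forall f0 g0, (forall n, f0 (g0 n) = n) -> forall n, upren f0 (upren g0 n) = n).
  { intros f0 g0 H0 [|n]; simpl; [reflexivity|]. rewrite H0; reflexivity. }
  revert f g; induction t; intros f g H; simpl; f_equal; auto.
Qed.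

(* The CS equation is symmetric, since [swap01] is an involution. *)
Lemma cs_root_sym t t' : cs_root t t' -> cs_root t' t.
Proof.
  destruct 1 as [t s v].
  rewrite <- (rename_inv swap01 swap01 t) at 2 by (intros [|[|n]]; reflexivity).
  constructor.
Qed.

Lemma ctx_sym R : (forall a b, R a b -> R b a) -> forall a b, ctx R a b -> ctx R b a.
Proof.
  intros HR a b H; induction H;
    [apply c_root; auto|apply c_lam|apply c_appl|apply c_appr|apply c_subl|apply c_subr]; auto.
Qed.

(* Weight of a jump whose argument is typed n times; it is superadditive up to 1,
   which makes the duplication rule c decrease the weight. *)
Definition jump_weight (n : nat) := 3 * n - 1.

Lemma jump_weight_ge2 n : 1 <= n -> 2 <= jump_weight n. Proof. unfold jump_weight; lia. Qed.

Section Typing.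
Variable B : nat.

(* The argument
   of an application or of a jump is typed at least once, even when it is erased. *)
Inductive ty : tctx -> term -> typ -> nat -> nat -> Prop :=
| ty_var G n t : ceq G (csingle n [t]) -> ty G (Var n) t 1 0
| ty_lam G Gb t M s N W : ty Gb t s N W -> subm (Gb 0) M -> ceq G (ctail Gb) ->
    ty G (Lam t) (Arr M s) (S N) (B * W)
| ty_app G G1 G2 t u M s L N1 W1 N2 W2 : ty G1 t (Arr M s) N1 W1 -> tys G2 u L N2 W2 ->
    L <> [] -> subm M L -> ceq G (cplus G1 G2) ->
    ty G (App t u) s (S (N1 + N2)) (B * (W1 + W2))
| ty_sub G G1 G2 t u s L N1 W1 N2 W2 : ty G1 t s N1 W1 -> tys G2 u L N2 W2 ->
    L <> [] -> subm (G1 0) L -> ceq G (cplus (ctail G1) G2) ->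
    ty G (Sub t u) s (N1 + N2) (W1 + jump_weight (length L) + B * W2)
with tys : tctx -> term -> list typ -> nat -> nat -> Prop :=
| tys_nil G u : ceq G cempty -> tys G u [] 0 0
| tys_cons G G1 G2 u s L N1 W1 N2 W2 : ty G1 u s N1 W1 -> tys G2 u L N2 W2 ->
    ceq G (cplus G1 G2) -> tys G u (s :: L) (N1 + N2) (W1 + W2).

Lemma ty_conv G G' t s N W : ty G t s N W -> ceq G G' -> ty G' t s N W.
Proof. intros H E; destruct H; econstructor; eauto; rewrite <- E; auto. Qed.
Lemma tys_conv G G' t s N W : tys G t s N W -> ceq G G' -> tys G' t s N W.
Proof. intros H E; destruct H; econstructor; eauto; rewrite <- E; auto. Qed.

Lemma ty_eq G t s N W N' W' : ty G t s N W -> N = N' -> W = W' -> ty G t s N' W'.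
Proof. intros; subst; auto. Qed.
Lemma tys_cons_eq G G1 G2 u s L N1 W1 N2 W2 N W : ty G1 u s N1 W1 -> tys G2 u L N2 W2 ->
  ceq G (cplus G1 G2) -> N = N1 + N2 -> W = W1 + W2 -> tys G u (s :: L) N W.
Proof. intros; subst; econstructor; eauto. Qed.

Lemma inv_var G n s N W : ty G (Var n) s N W -> ceq G (csingle n [s]) /\ N = 1 /\ W = 0.
Proof. intro H; inversion H; subst; auto. Qed.
Lemma inv_lam G t s N W : ty G (Lam t) s N W -> exists Gb M s' N' W',
  s = Arr M s' /\ ty Gb t s' N' W' /\ subm (Gb 0) M /\ ceq G (ctail Gb) /\
  N = S N' /\ W = B * W'.
Proof. intro H; inversion H; subst; do 5 eexists; repeat split; eauto. Qed.
Lemma inv_app G t u s N W : ty G (App t u) s N W -> exists G1 G2 M L N1 W1 N2 W2,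
  ty G1 t (Arr M s) N1 W1 /\ tys G2 u L N2 W2 /\ L <> [] /\ subm M L /\
  ceq G (cplus G1 G2) /\ N = S (N1 + N2) /\ W = B * (W1 + W2).
Proof. intro H; inversion H; subst; do 8 eexists; repeat split; eauto. Qed.
Lemma inv_sub G t u s N W : ty G (Sub t u) s N W -> exists G1 G2 L N1 W1 N2 W2,
  ty G1 t s N1 W1 /\ tys G2 u L N2 W2 /\ L <> [] /\ subm (G1 0) L /\
  ceq G (cplus (ctail G1) G2) /\ N = N1 + N2 /\ W = W1 + jump_weight (length L) + B * W2.
Proof. intro H; inversion H; subst; do 7 eexists; repeat split; eauto. Qed.

Lemma tys_one G u s N W : ty G u s N W -> tys G u [s] N W.
Proof.
  intros H. eapply tys_cons_eq; eauto. apply tys_nil, ceq_refl.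
  intro n; unfold cplus, cempty; rewrite app_nil_r; reflexivity. all: lia.
Qed.

Lemma tys_nil_inv D u l N W : tys D u l N W -> Permutation l [] ->
  ceq D cempty /\ N = 0 /\ W = 0.
Proof. intros H P. symmetry in P; apply Permutation_nil in P; subst. inversion H; subst; auto. Qed.

Lemma tys_one_inv D u s N W : tys D u [s] N W -> ty D u s N W.
Proof.
  intro H; inversion H as [|? G1 G2 ? ? ? N1 W1 N2 W2 T R E]; subst.
  apply tys_nil_inv in R as (E2 & -> & ->); auto. rewrite !Nat.add_0_r.
  eapply ty_conv; eauto. rewrite E, E2. symmetry; apply cplus_empty_r.
Qed.

Lemma tys_app G1 G2 u M R N1 W1 N2 W2 : tys G1 u M N1 W1 -> tys G2 u R N2 W2 ->
  tys (cplus G1 G2) u (M ++ R) (N1 + N2) (W1 + W2).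
Proof.
  intros H; revert G2 R N2 W2; induction H; intros G' R' N' W' H2; simpl.
  - eapply tys_conv; eauto. intro n; unfold cplus; rewrite (H n); reflexivity.
  - eapply tys_cons_eq; [eauto| apply (IHtys _ _ _ _ H2) | | lia | lia].
    intro n; unfold cplus; rewrite (H1 n); unfold cplus; rewrite app_assoc; reflexivity.
Qed.

Lemma tys_split M : forall G u R N W, tys G u (M ++ R) N W ->
  exists G1 G2 N1 N2 W1 W2, tys G1 u M N1 W1 /\ tys G2 u R N2 W2 /\ ceq G (cplus G1 G2)
    /\ N = N1 + N2 /\ W = W1 + W2.
Proof.
  induction M; intros G u R N W H; simpl in *.
  - exists cempty, G, 0, N, 0, W; repeat split; auto. apply tys_nil, ceq_refl.
    intro n; reflexivity.
  - inversion H as [|? G1 G2 ? ? ? N1 W1 N2 W2 Hty Hr E0]; subst.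
    destruct (IHM _ _ _ _ _ Hr) as (Ga & Gb & Na & Nb & Wa & Wb & Ha & Hb & E & -> & ->).
    exists (cplus G1 Ga), Gb, (N1 + Na), Nb, (W1 + Wa), Wb; repeat split; try lia; auto.
    econstructor; eauto; apply ceq_refl.
    intro n; rewrite (E0 n); unfold cplus; rewrite (E n); unfold cplus; rewrite app_assoc.
    reflexivity.
Qed.

Lemma tys_perm L L' : Permutation L L' -> forall G u N W, tys G u L N W -> tys G u L' N W.
Proof.
  induction 1 as [| | |l l' l'' P1 IH1 P2 IH2]; intros G u N W Hh; auto.
  - inversion Hh; subst; econstructor; eauto.
  - inversion Hh as [|? G1 G2 ? ? ? N1 W1 N2 W2 Hty Hr E0]; subst.
    inversion Hr as [|? G3 G4 ? ? ? N3 W3 N4 W4 Hty' Hr' E1]; subst.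
    eapply tys_cons_eq;
      [ eauto | eapply tys_cons; [ eauto | eauto | apply ceq_refl ] | | lia | lia ].
    intro n; rewrite (E0 n); unfold cplus; rewrite (E1 n); unfold cplus; perm_solve.
Qed.

Lemma tys_split_ceq k G G1 G2 D u Nu Wu : tys D u (G k) Nu Wu -> ceq G (cplus G1 G2) ->
  exists D1 D2 N1 N2 W1 W2, tys D1 u (G1 k) N1 W1 /\ tys D2 u (G2 k) N2 W2 /\
   ceq D (cplus D1 D2) /\ Nu = N1 + N2 /\ Wu = W1 + W2.
Proof. intros H E. apply tys_split. eapply tys_perm; [apply E | exact H]. Qed.

Lemma ty_size_pos t : forall G s N W, ty G t s N W -> 1 <= N.
Proof.
  induction t; intros G s N W H; inversion H; subst; try lia.
  match goal with H3 : ty _ t1 _ _ _ |- _ => apply IHt1 in H3 end; lia.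
Qed.

Lemma tys_length G u L N W : tys G u L N W -> length L <= N.
Proof. induction 1; simpl; auto. apply ty_size_pos in H; lia. Qed.

Lemma tys_transport (Rc : tctx -> tctx -> Prop) u u' :
  (forall G D G', ceq G D -> Rc D G' -> Rc G G') -> Rc cempty cempty ->
  (forall G1 G2 D1 D2, Rc G1 D1 -> Rc G2 D2 -> Rc (cplus G1 G2) (cplus D1 D2)) ->
  (forall G s N W, ty G u s N W -> exists G', Rc G G' /\ ty G' u' s N W) ->
  forall G L N W, tys G u L N W -> exists G', Rc G G' /\ tys G' u' L N W.
Proof.
  intros Hc Hz Hp Hu G L N W H; induction H as [G u0 E|G G1 G2 u0 s L N1 W1 N2 W2 T R IH E].
  - exists cempty; split. eapply Hc; [exact E | exact Hz]. apply tys_nil, ceq_refl.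
  - destruct (Hu _ _ _ _ T) as (D1 & R1 & T1). destruct (IH Hu) as (D2 & R2 & T2).
    exists (cplus D1 D2); split. eapply Hc; [exact E| apply Hp; eauto].
    econstructor; eauto. apply ceq_refl.
Qed.

Lemma rename_ty t : forall f G s N W, injective f -> ty G t s N W ->
  exists G', ren_ctx f G G' /\ ty G' (rename f t) s N W.
Proof.
  induction t; intros f G s N W Hf H; simpl.
  - apply inv_var in H as (E & -> & ->).
    exists (csingle (f n) [s]); split. eapply ren_ctx_ceq; eauto. apply ren_ctx_single; auto.
    constructor; apply ceq_refl.
  - apply inv_lam in H as (Gb & M & s' & N' & W' & -> & Tb & Sb & E & -> & ->).
    destruct (IHt _ _ _ _ _ (injective_upren f Hf) Tb) as (Gb' & R & T).
    exists (ctail Gb'); split. eapply ren_ctx_ceq; eauto. apply ren_ctx_tail; auto.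
    econstructor; eauto. eapply subm_perm_l; [symmetry; apply (ren_ctx_zero _ _ _ R)|]; auto.
    apply ceq_refl.
  - apply inv_app in H as (G1 & G2 & M & L & N1 & W1 & N2 & W2 & T1 & T2 & NL & SM & E & -> & ->).
    destruct (IHt1 _ _ _ _ _ Hf T1) as (G1' & R1 & T1').
    destruct (tys_transport (ren_ctx f) t2 (rename f t2)) with (5 := T2) as (G2' & R2 & T2').
    intros; eapply ren_ctx_ceq; eauto. apply ren_ctx_empty. intros; apply ren_ctx_plus; auto.
    intros; eapply IHt2; eauto.
    exists (cplus G1' G2'); split. eapply ren_ctx_ceq; eauto. apply ren_ctx_plus; auto.
    econstructor; eauto. apply ceq_refl.
  - apply inv_sub in H as (G1 & G2 & L & N1 & W1 & N2 & W2 & T1 & T2 & NL & SM & E & -> & ->).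
    destruct (IHt1 _ _ _ _ _ (injective_upren f Hf) T1) as (G1' & R1 & T1').
    destruct (tys_transport (ren_ctx f) t2 (rename f t2)) with (5 := T2) as (G2' & R2 & T2').
    intros; eapply ren_ctx_ceq; eauto. apply ren_ctx_empty. intros; apply ren_ctx_plus; auto.
    intros; eapply IHt2; eauto.
    exists (cplus (ctail G1') G2'); split. eapply ren_ctx_ceq; eauto. apply ren_ctx_plus; auto.
    apply ren_ctx_tail; auto.
    econstructor; eauto. eapply subm_perm_l; [symmetry; apply (ren_ctx_zero _ _ _ R1)|]; auto.
    apply ceq_refl.
Qed.

Lemma rename_tys f G u L N W : injective f -> tys G u L N W ->
  exists G', ren_ctx f G G' /\ tys G' (rename f u) L N W.
Proof.
  intros Hf; apply tys_transport. intros; eapply ren_ctx_ceq; eauto. apply ren_ctx_empty.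
  intros; apply ren_ctx_plus; auto. intros; eapply rename_ty; eauto.
Qed.

Lemma rename_ty_inv t : forall f G' s N W, injective f -> ty G' (rename f t) s N W ->
  exists G, ren_ctx f G G' /\ ty G t s N W.
Proof.
  induction t; intros f G' s N W Hf H; simpl in H.
  - apply inv_var in H as (E & -> & ->).
    exists (csingle n [s]); split. eapply ren_ctx_ceq'; eauto. apply ren_ctx_single; auto.
    constructor; apply ceq_refl.
  - apply inv_lam in H as (Gb' & M & s' & N' & W' & -> & Tb & Sb & E & -> & ->).
    destruct (IHt _ _ _ _ _ (injective_upren f Hf) Tb) as (Gb & R & T).
    exists (ctail Gb); split. eapply ren_ctx_ceq'; eauto. apply ren_ctx_tail; auto.
    econstructor; eauto. eapply subm_perm_l; [apply (ren_ctx_zero _ _ _ R)|]; auto.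
    apply ceq_refl.
  - apply inv_app in H as (G1' & G2' & M & L & N1 & W1 & N2 & W2 & T1 & T2 & NL & SM & E & -> & ->).
    destruct (IHt1 _ _ _ _ _ Hf T1) as (G1 & R1 & T1').
    destruct (tys_transport (fun X Y => ren_ctx f Y X) (rename f t2) t2) with (5 := T2)
      as (G2 & R2 & T2').
    intros; eapply ren_ctx_ceq'; eauto. apply ren_ctx_empty. intros; apply ren_ctx_plus; auto.
    intros; eapply IHt2; eauto.
    exists (cplus G1 G2); split. eapply ren_ctx_ceq'; eauto. apply ren_ctx_plus; auto.
    econstructor; eauto. apply ceq_refl.
  - apply inv_sub in H as (G1' & G2' & L & N1 & W1 & N2 & W2 & T1 & T2 & NL & SM & E & -> & ->).
    destruct (IHt1 _ _ _ _ _ (injective_upren f Hf) T1) as (G1 & R1 & T1').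
    destruct (tys_transport (fun X Y => ren_ctx f Y X) (rename f t2) t2) with (5 := T2)
      as (G2 & R2 & T2').
    intros; eapply ren_ctx_ceq'; eauto. apply ren_ctx_empty. intros; apply ren_ctx_plus; auto.
    intros; eapply IHt2; eauto.
    exists (cplus (ctail G1) G2); split. eapply ren_ctx_ceq'; eauto. apply ren_ctx_plus; auto.
    apply ren_ctx_tail; auto.
    econstructor; eauto. eapply subm_perm_l; [apply (ren_ctx_zero _ _ _ R1)|]; auto.
    apply ceq_refl.
Qed.

Lemma rename_tys_inv f G' u L N W : injective f -> tys G' (rename f u) L N W ->
  exists G, ren_ctx f G G' /\ tys G u L N W.
Proof.
  intros Hf H.
  destruct (tys_transport (fun X Y => ren_ctx f Y X) (rename f u) u) with (5 := H)
    as (G & R & T); eauto.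
  intros; eapply ren_ctx_ceq'; eauto. apply ren_ctx_empty. intros; apply ren_ctx_plus; auto.
  intros; eapply rename_ty_inv; eauto.
Qed.

Lemma lift_ty D u s N W : ty D u s N W -> ty (scons [] D) (lift u) s N W.
Proof. intro H. destruct (rename_ty u S D s N W injective_S H) as (G' & R & T).
  eapply ty_conv; eauto. apply ren_ctx_S; auto. Qed.
Lemma lift_tys D u L N W : tys D u L N W -> tys (scons [] D) (lift u) L N W.
Proof. intro H. destruct (rename_tys S D u L N W injective_S H) as (G' & R & T).
  eapply tys_conv; eauto. apply ren_ctx_S; auto. Qed.
Lemma lift_ty_inv G u s N W : ty G (lift u) s N W ->
  exists D, ty D u s N W /\ ceq G (scons [] D).
Proof. intro H. destruct (rename_ty_inv u S G s N W injective_S H) as (D & R & T).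
  exists D; split; auto. apply ren_ctx_S; auto. Qed.
Lemma lift_tys_inv G u L N W : tys G (lift u) L N W ->
  exists D, tys D u L N W /\ ceq G (scons [] D).
Proof. intro H. destruct (rename_tys_inv S G u L N W injective_S H) as (D & R & T).
  exists D; split; auto. apply ren_ctx_S; auto. Qed.
Lemma swap_ty G t s N W : ty G t s N W -> ty (cswap G) (rename swap01 t) s N W.
Proof. intro H. destruct (rename_ty t swap01 G s N W injective_swap01 H) as (G' & R & T).
  eapply ty_conv; eauto. apply ren_ctx_swap; auto. Qed.
Lemma uprenS_ty G t s N W : ty G t s N W -> ty (cins1 G) (rename (upren S) t) s N W.
Proof.
  intro H.
  destruct (rename_ty t (upren S) G s N W (injective_upren S injective_S) H) as (G' & R & T).
  eapply ty_conv; eauto. apply ren_ctx_uprenS; auto.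
Qed.

Lemma liftn_ty k D u s N W : ty D u s N W -> ty (shiftc k D) (liftn k u) s N W.
Proof. induction k; intro H; simpl. eapply ty_conv; eauto. symmetry; apply shiftc_0.
  eapply ty_conv. apply lift_ty, IHk, H. symmetry; apply shiftc_S. Qed.
Lemma liftn_ty_inv k G u s N W : ty G (liftn k u) s N W ->
  exists D, ty D u s N W /\ ceq G (shiftc k D).
Proof. revert G; induction k; intros G H; simpl in H. exists G; split; auto. symmetry; apply shiftc_0.
  apply lift_ty_inv in H as (D & T & E). apply IHk in T as (D' & T & E').
  exists D'; split; auto. rewrite E, shiftc_S. intros [|n]; simpl; auto. Qed.

(* In the variable case the substituted index consumes one
   copy of u, any other index is renumbered. *)
Lemma subst_var_ty u n k G s D Nu Wu : ceq G (csingle n [s]) -> tys D u (G k) Nu Wu ->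
  exists G' N' W', ty G' (subst_at k u (Var n)) s N' W' /\
     ceq G' (cplus (dropk k G) (shiftc k D)) /\ N' + length (G k) = 1 + Nu.
Proof.
  intros E Hu; simpl.
  pose proof (E k) as Ek. unfold csingle in Ek.
  destruct (Nat.ltb_spec n k), (Nat.eqb_spec n k); try lia.
  - rewrite (proj2 (Nat.eqb_neq k n)) in Ek by lia.
    apply tys_nil_inv in Hu as (ED & -> & ->); auto.
    exists (csingle n [s]), 1, 0; repeat split. constructor; apply ceq_refl.
    rewrite ED, shiftc_empty, cplus_empty_r, E. intro m; unfold dropk, csingle.
    destruct (Nat.ltb_spec m k), (Nat.eqb_spec m n), (Nat.eqb_spec (S m) n);
      try lia; reflexivity.
    rewrite (Permutation_length Ek); simpl; lia.
  - subst. rewrite Nat.eqb_refl in Ek.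
    eapply tys_perm in Hu; [|exact Ek]. apply tys_one_inv in Hu.
    exists (shiftc k D), Nu, Wu; repeat split. apply liftn_ty; auto.
    rewrite E. intro m; unfold dropk, csingle, cplus.
    destruct (Nat.ltb_spec m k), (Nat.eqb_spec m k), (Nat.eqb_spec (S m) k);
      try lia; reflexivity.
    rewrite (Permutation_length Ek); simpl; lia.
  - rewrite (proj2 (Nat.eqb_neq k n)) in Ek by lia.
    apply tys_nil_inv in Hu as (ED & -> & ->); auto.
    exists (csingle (pred n) [s]), 1, 0; repeat split. constructor; apply ceq_refl.
    rewrite ED, shiftc_empty, cplus_empty_r, E. intro m; unfold dropk, csingle.
    destruct (Nat.ltb_spec m k), (Nat.eqb_spec m (pred n)), (Nat.eqb_spec m n),
      (Nat.eqb_spec (S m) n); try lia; reflexivity.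
    rewrite (Permutation_length Ek); simpl; lia.
Qed.

Lemma tys_subst k u t :
  (forall G s N W D Nu Wu, ty G t s N W -> tys D u (G k) Nu Wu ->
     exists G' N' W', ty G' (subst_at k u t) s N' W' /\
       ceq G' (cplus (dropk k G) (shiftc k D)) /\ N' + length (G k) = N + Nu) ->
  forall G L N W D Nu Wu, tys G t L N W -> tys D u (G k) Nu Wu ->
     exists G' N' W', tys G' (subst_at k u t) L N' W' /\
       ceq G' (cplus (dropk k G) (shiftc k D)) /\ N' + length (G k) = N + Nu.
Proof.
  intros IH G L N W D Nu Wu T.
  revert D Nu Wu; induction T as [G u0 E|G Ga Gb u0 s0 L N1 W1 N2 W2 T R IHR E];
    intros D Nu Wu Hu.
  - apply tys_nil_inv in Hu as (ED & -> & ->); [|apply E].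
    exists cempty, 0, 0; repeat split. apply tys_nil, ceq_refl.
    rewrite ED, E, dropk_empty, shiftc_empty; symmetry; apply cplus_empty_r.
    rewrite (Permutation_length (E k)); reflexivity.
  - destruct (tys_split_ceq _ _ _ _ _ _ _ _ Hu E)
      as (Da & Db & Na & Nb & Wa & Wb & Ha & Hb & ED & -> & ->).
    destruct (IH _ _ _ _ _ _ _ T Ha) as (Ga' & Na' & Wa' & Ta' & Ea & HNa).
    destruct (IHR IH _ _ _ Hb) as (Gb' & Nb' & Wb' & Tb' & Eb & HNb).
    exists (cplus Ga' Gb'), (Na' + Nb'), (Wa' + Wb'); repeat split.
    + econstructor; eauto. apply ceq_refl.
    + rewrite Ea, Eb, E, ED, dropk_plus, shiftc_plus. ctx_solve.
    + rewrite (Permutation_length (E k)). unfold cplus; rewrite length_app. lia.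
Qed.

Lemma subst_ty u t : forall k G s N W D Nu Wu, ty G t s N W -> tys D u (G k) Nu Wu ->
  exists G' N' W', ty G' (subst_at k u t) s N' W' /\
     ceq G' (cplus (dropk k G) (shiftc k D)) /\ N' + length (G k) = N + Nu.
Proof.
  induction t; intros k G s N W D Nu Wu H Hu; simpl.
  - apply inv_var in H as (E & -> & ->). exact (subst_var_ty u n k G s D Nu Wu E Hu).
  - apply inv_lam in H as (Gb & M & s' & N0 & W0 & -> & Tb & Sb & E & -> & ->).
    assert (Hu' : tys D u (Gb (S k)) Nu Wu) by (eapply tys_perm; eauto; apply E).
    destruct (IHt _ _ _ _ _ _ _ _ Tb Hu') as (Gb' & N' & W' & T' & E' & HN).
    exists (ctail Gb'), (S N'), (B * W'); repeat split.
    + econstructor; eauto. eapply subm_perm_l; [|exact Sb]. rewrite (E' 0).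
      unfold cplus, dropk, shiftc; simpl; rewrite app_nil_r; reflexivity. apply ceq_refl.
    + rewrite E', ctail_plus, ctail_dropk, ctail_shiftc, E. reflexivity.
    + rewrite (Permutation_length (E k)). unfold ctail in *. lia.
  - apply inv_app in H as (G1 & G2 & M & L & N1 & W1 & N2 & W2 & T1 & T2 & NL & SM & E & -> & ->).
    destruct (tys_split_ceq _ _ _ _ _ _ _ _ Hu E)
      as (D1 & D2 & Nu1 & Nu2 & Wu1 & Wu2 & H1 & H2 & ED & -> & ->).
    destruct (IHt1 _ _ _ _ _ _ _ _ T1 H1) as (G1' & N1' & W1' & T1' & E1 & HN1).
    destruct (tys_subst k u t2 (IHt2 k) _ _ _ _ _ _ _ T2 H2) as (G2' & N2' & W2' & T2' & E2 & HN2).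
    exists (cplus G1' G2'), (S (N1' + N2')), (B * (W1' + W2')); repeat split.
    + econstructor; eauto. apply ceq_refl.
    + rewrite E1, E2, E, ED, dropk_plus, shiftc_plus. ctx_solve.
    + rewrite (Permutation_length (E k)). unfold cplus; rewrite length_app. lia.
  - apply inv_sub in H as (G1 & G2 & L & N1 & W1 & N2 & W2 & T1 & T2 & NL & SM & E & -> & ->).
    destruct (tys_split_ceq _ _ _ _ _ _ _ _ Hu E)
      as (D1 & D2 & Nu1 & Nu2 & Wu1 & Wu2 & H1 & H2 & ED & -> & ->).
    destruct (IHt1 (S k) _ _ _ _ _ _ _ T1 H1) as (G1' & N1' & W1' & T1' & E1 & HN1).
    destruct (tys_subst k u t2 (IHt2 k) _ _ _ _ _ _ _ T2 H2) as (G2' & N2' & W2' & T2' & E2 & HN2).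
    exists (cplus (ctail G1') G2'), (N1' + N2'), (W1' + jump_weight (length L) + B * W2');
      repeat split.
    + econstructor; eauto. eapply subm_perm_l; [|exact SM]. rewrite (E1 0).
      unfold cplus, dropk, shiftc; simpl; rewrite app_nil_r; reflexivity. apply ceq_refl.
    + rewrite E1, E2, E, ED, ctail_plus, ctail_dropk, ctail_shiftc, dropk_plus, shiftc_plus.
      ctx_solve.
    + rewrite (Permutation_length (E k)). unfold cplus, ctail in *; rewrite length_app. lia.
Qed.

Lemma antisubst_var_ty u n k G' s N W : ty G' (subst_at k u (Var n)) s N W ->
  exists G D N0 W0 Nu Wu, ty G (Var n) s N0 W0 /\ tys D u (G k) Nu Wu /\
    ceq G' (cplus (dropk k G) (shiftc k D)).
Proof.
  intro H; simpl in H.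
  destruct (Nat.ltb_spec n k); [|destruct (Nat.eqb_spec n k)].
  - apply inv_var in H as (E & -> & ->).
    exists (csingle n [s]), cempty, 1, 0, 0, 0; repeat split. constructor; apply ceq_refl.
    unfold csingle; rewrite (proj2 (Nat.eqb_neq k n)) by lia. apply tys_nil, ceq_refl.
    rewrite E, shiftc_empty, cplus_empty_r. intro m; unfold dropk, csingle.
    destruct (Nat.ltb_spec m k), (Nat.eqb_spec m n), (Nat.eqb_spec (S m) n);
      try lia; reflexivity.
  - subst. apply liftn_ty_inv in H as (D & T & E).
    exists (csingle k [s]), D, 1, 0, N, W; repeat split. constructor; apply ceq_refl.
    unfold csingle; rewrite Nat.eqb_refl. apply tys_one; auto.
    rewrite E. intro m; unfold dropk, csingle, cplus.
    destruct (Nat.ltb_spec m k), (Nat.eqb_spec m k), (Nat.eqb_spec (S m) k);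
      try lia; reflexivity.
  - apply inv_var in H as (E & -> & ->).
    exists (csingle n [s]), cempty, 1, 0, 0, 0; repeat split. constructor; apply ceq_refl.
    unfold csingle; rewrite (proj2 (Nat.eqb_neq k n)) by lia. apply tys_nil, ceq_refl.
    rewrite E, shiftc_empty, cplus_empty_r. intro m; unfold dropk, csingle.
    destruct (Nat.ltb_spec m k), (Nat.eqb_spec m (pred n)), (Nat.eqb_spec m n),
      (Nat.eqb_spec (S m) n); try lia; reflexivity.
Qed.

Lemma tys_antisubst k u t :
  (forall G' s N W, ty G' (subst_at k u t) s N W ->
     exists G D N0 W0 Nu Wu, ty G t s N0 W0 /\ tys D u (G k) Nu Wu /\
       ceq G' (cplus (dropk k G) (shiftc k D))) ->
  forall G' L N W, tys G' (subst_at k u t) L N W ->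
     exists G D N0 W0 Nu Wu, tys G t L N0 W0 /\ tys D u (G k) Nu Wu /\
       ceq G' (cplus (dropk k G) (shiftc k D)).
Proof.
  intros IH G' L N W T. remember (subst_at k u t) as v eqn:Ev. revert Ev.
  induction T as [G u0 E|G Ga Gb u0 s0 L N1 W1 N2 W2 T R IHR E]; intros Ev; subst.
  - exists cempty, cempty, 0, 0, 0, 0; repeat split. apply tys_nil, ceq_refl.
    apply tys_nil, ceq_refl. rewrite E, dropk_empty, shiftc_empty; symmetry; apply cplus_empty_r.
  - destruct (IH _ _ _ _ T) as (Ga' & Da & Na & Wa & Nua & Wua & Ta & Hua & Ea).
    destruct (IHR IH eq_refl) as (Gb' & Db & Nb & Wb & Nub & Wub & Tb & Hub & Eb).
    exists (cplus Ga' Gb'), (cplus Da Db), (Na + Nb), (Wa + Wb), (Nua + Nub), (Wua + Wub);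
      repeat split.
    + econstructor; eauto. apply ceq_refl.
    + apply tys_app; auto.
    + rewrite E, Ea, Eb, dropk_plus, shiftc_plus. ctx_solve.
Qed.

Lemma antisubst_ty u t : forall k G' s N W, ty G' (subst_at k u t) s N W ->
  exists G D N0 W0 Nu Wu, ty G t s N0 W0 /\ tys D u (G k) Nu Wu /\
    ceq G' (cplus (dropk k G) (shiftc k D)).
Proof.
  induction t; intros k G' s N W H; simpl in H.
  - exact (antisubst_var_ty u n k G' s N W H).
  - apply inv_lam in H as (Gb' & M & s' & N0 & W0 & -> & Tb & Sb & E & -> & ->).
    destruct (IHt _ _ _ _ _ Tb) as (Gb & D & N1 & W1 & Nu & Wu & T & Hu & E').
    exists (ctail Gb), D, (S N1), (B * W1), Nu, Wu; repeat split; auto.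
    + econstructor; eauto. eapply subm_perm_l; [|exact Sb]. rewrite (E' 0).
      unfold cplus, dropk, shiftc; simpl; rewrite app_nil_r; reflexivity. apply ceq_refl.
    + rewrite E, E', ctail_plus, ctail_dropk, ctail_shiftc. reflexivity.
  - apply inv_app in H as (G1' & G2' & M & L & N1 & W1 & N2 & W2 & T1 & T2 & NL & SM & E & -> & ->).
    destruct (IHt1 _ _ _ _ _ T1) as (G1 & D1 & N1' & W1' & Nu1 & Wu1 & T1' & Hu1 & E1).
    destruct (tys_antisubst k u t2 (IHt2 k) _ _ _ _ T2)
      as (G2 & D2 & N2' & W2' & Nu2 & Wu2 & T2' & Hu2 & E2).
    exists (cplus G1 G2), (cplus D1 D2), (S (N1' + N2')), (B * (W1' + W2')), (Nu1 + Nu2),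
      (Wu1 + Wu2); repeat split.
    + econstructor; eauto. apply ceq_refl.
    + apply tys_app; auto.
    + rewrite E, E1, E2, dropk_plus, shiftc_plus. ctx_solve.
  - apply inv_sub in H as (G1' & G2' & L & N1 & W1 & N2 & W2 & T1 & T2 & NL & SM & E & -> & ->).
    destruct (IHt1 _ _ _ _ _ T1) as (G1 & D1 & N1' & W1' & Nu1 & Wu1 & T1' & Hu1 & E1).
    destruct (tys_antisubst k u t2 (IHt2 k) _ _ _ _ T2)
      as (G2 & D2 & N2' & W2' & Nu2 & Wu2 & T2' & Hu2 & E2).
    exists (cplus (ctail G1) G2), (cplus D1 D2), (N1' + N2'),
      (W1' + jump_weight (length L) + B * W2'), (Nu1 + Nu2), (Wu1 + Wu2); repeat split.
    + econstructor; eauto. eapply subm_perm_l; [|exact SM]. rewrite (E1 0).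
      unfold cplus, dropk, shiftc; simpl; rewrite app_nil_r; reflexivity. apply ceq_refl.
    + apply tys_app; auto.
    + rewrite E, E1, E2, ctail_plus, ctail_dropk, ctail_shiftc, dropk_plus, shiftc_plus.
      ctx_solve.
Qed.

Lemma split_ty k t t' : split_occ k t t' -> forall G s N W, ty G t s N W ->
  exists G', split_ctx k G G' /\ ty G' t' s N W.
Proof.
  induction 1 as [d|d|d n Hlt|d n Hlt|d t t' Hs IH|d t t' u u' Hs1 IH1 Hs2 IH2
                 |d t t' u u' Hs1 IH1 Hs2 IH2]; intros G s N W H.
  1-4: apply inv_var in H as (E & -> & ->).
  1: exists (csingle d [s]). 2: exists (csingle (S d) [s]).
  3: exists (csingle n [s]). 4: exists (csingle (S n) [s]).
  1-4: split;
    [ eapply split_ctx_ceq; [exact E|]; unfold csingle; repeat split; intros;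
      repeat match goal with |- context [Nat.eqb ?a ?b] => destruct (Nat.eqb_spec a b) end;
      try lia; simpl; reflexivity
    | constructor; apply ceq_refl ].
  - apply inv_lam in H as (Gb & M & s' & N0 & W0 & -> & Tb & Sb & E & -> & ->).
    destruct (IH _ _ _ _ Tb) as (Gb' & R & T).
    exists (ctail Gb'); split. eapply split_ctx_ceq; eauto. apply split_ctx_tail; auto.
    econstructor; eauto. eapply subm_perm_l; [symmetry; apply (split_ctx_zero _ _ _ R)|]; auto.
    apply ceq_refl.
  - apply inv_app in H as (G1 & G2 & M & L & N1 & W1 & N2 & W2 & T1 & T2 & NL & SM & E & -> & ->).
    destruct (IH1 _ _ _ _ T1) as (G1' & R1 & T1').
    destruct (tys_transport (split_ctx d) u u') with (5 := T2) as (G2' & R2 & T2').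
    intros; eapply split_ctx_ceq; eauto. apply split_ctx_empty.
    intros; apply split_ctx_plus; auto. auto.
    exists (cplus G1' G2'); split. eapply split_ctx_ceq; eauto. apply split_ctx_plus; auto.
    econstructor; eauto. apply ceq_refl.
  - apply inv_sub in H as (G1 & G2 & L & N1 & W1 & N2 & W2 & T1 & T2 & NL & SM & E & -> & ->).
    destruct (IH1 _ _ _ _ T1) as (G1' & R1 & T1').
    destruct (tys_transport (split_ctx d) u u') with (5 := T2) as (G2' & R2 & T2').
    intros; eapply split_ctx_ceq; eauto. apply split_ctx_empty.
    intros; apply split_ctx_plus; auto. auto.
    exists (cplus (ctail G1') G2'); split. eapply split_ctx_ceq; eauto.
    apply split_ctx_plus; auto. apply split_ctx_tail; auto.
    econstructor; eauto. eapply subm_perm_l; [symmetry; apply (split_ctx_zero _ _ _ R1)|]; auto.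
    apply ceq_refl.
Qed.

Lemma occ_ty t : forall k G s N W, ty G t s N W -> occ k t <= length (G k).
Proof.
  assert (Htys : forall u k G L N W, tys G u L N W -> L <> [] ->
            (forall G s N W, ty G u s N W -> occ k u <= length (G k)) ->
            occ k u <= length (G k)).
  { intros u k G L N W H NL Hu. destruct H as [|G G1 G2 u s L N1 W1 N2 W2 T R E]. congruence.
    apply Hu in T. rewrite (Permutation_length (E k)); unfold cplus; rewrite length_app; lia. }
  induction t; intros k G s N W H; simpl.
  - apply inv_var in H as (E & -> & ->). rewrite (Permutation_length (E k)); unfold csingle.
    destruct (Nat.eqb_spec n k), (Nat.eqb_spec k n); simpl; lia.
  - apply inv_lam in H as (Gb & M & s' & N0 & W0 & -> & Tb & Sb & E & -> & ->).
    rewrite (Permutation_length (E k)). apply (IHt _ _ _ _ _ Tb).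
  - apply inv_app in H as (G1 & G2 & M & L & N1 & W1 & N2 & W2 & T1 & T2 & NL & SM & E & -> & ->).
    rewrite (Permutation_length (E k)); unfold cplus; rewrite length_app.
    pose proof (IHt1 k _ _ _ _ T1). pose proof (Htys _ k _ _ _ _ T2 NL (IHt2 k)). lia.
  - apply inv_sub in H as (G1 & G2 & L & N1 & W1 & N2 & W2 & T1 & T2 & NL & SM & E & -> & ->).
    rewrite (Permutation_length (E k)); unfold cplus; rewrite length_app.
    pose proof (IHt1 (S k) _ _ _ _ T1). pose proof (Htys _ k _ _ _ _ T2 NL (IHt2 k)).
    unfold ctail; lia.
Qed.

Definition lex_lt (N' W' N W : nat) := N' < N \/ (N' = N /\ W' < W).

Definition smaller_typing (G : tctx) (t' : term) (s : typ) (N W : nat) : Prop :=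
  exists G' N' W', ty G' t' s N' W' /\ csubm G' G /\ lex_lt N' W' N W.

Definition decreasing (t t' : term) : Prop :=
  forall G s N W, ty G t s N W -> 3 * N + 1 <= B -> smaller_typing G t' s N W.

(* Multiple typings of a jump [v[x/u]]: the copies of v and of u are gathered, and
   each nonempty copy carries a jump weight of at least 1, collected in Wc. *)
Lemma tys_sub_inv G2 v u L N2 W2 : tys G2 (Sub v u) L N2 W2 ->
  exists Gv Gu Lu Nv Wv Nu Wu Wc, tys Gv v L Nv Wv /\ tys Gu u Lu Nu Wu /\ subm (Gv 0) Lu /\
   ceq G2 (cplus (ctail Gv) Gu) /\ N2 = Nv + Nu /\ W2 = Wv + Wc + B * Wu /\
   (L <> [] -> Lu <> [] /\ 1 <= Wc).
Proof.
  remember (Sub v u) as x eqn:Ex.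
  induction 1 as [G u0 E|G Ga Gb u0 s L N1 W1 N2 W2 T R IH E]; subst.
  - exists cempty, cempty, [], 0, 0, 0, 0, 0; repeat split; auto. apply tys_nil, ceq_refl.
    apply tys_nil, ceq_refl. apply subm_nil. all: try lia. all: intros; congruence.
  - apply inv_sub in T as (G1 & G3 & La & Na & Wa & Nb & Wb & T1 & T3 & NLa & SMa & Ea & -> & ->).
    destruct (IH eq_refl)
      as (Gv & Gu & Lu & Nv & Wv & Nu & Wu & Wc & Tv & Tu & SM & E2 & -> & -> & _).
    exists (cplus G1 Gv), (cplus G3 Gu), (La ++ Lu), (Na + Nv), (Wa + Wv), (Nb + Nu), (Wb + Wu),
      (jump_weight (length La) + Wc); repeat split.
    + econstructor; eauto. apply ceq_refl.
    + apply tys_app; auto.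
    + apply subm_app; auto.
    + rewrite E, Ea, E2. ctx_solve.
    + lia.
    + nia.
    + destruct La; simpl; congruence.
    + destruct La; [congruence|]. simpl; unfold jump_weight; lia.
Qed.

(* Rule dB at a distance: the argument is pushed under the list of jumps L, the
   application node disappears. *)
Lemma dB_ty t L : forall Gl M s Nl Wl, ty Gl (apply_L (Lam t) L) (Arr M s) Nl Wl ->
  forall u D Lu Nu Wu, tys D u Lu Nu Wu -> Lu <> [] -> subm M Lu ->
  exists G' N' W', ty G' (apply_L (Sub t (liftn (length L) u)) L) s N' W' /\
    ceq G' (cplus Gl D) /\ N' + 1 = Nl + Nu.
Proof.
  induction L as [|v l IH] using rev_ind; intros Gl M s Nl Wl H u D Lu Nu Wu Hu NL SM.
  - simpl in *. apply inv_lam in H as (Gb & M' & s' & N0 & W0 & E0 & Tb & Sb & E & -> & ->).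
    injection E0; intros; subst.
    exists (cplus (ctail Gb) D), (N0 + Nu), (W0 + jump_weight (length Lu) + B * Wu);
      repeat split.
    + econstructor; eauto. eapply subm_trans; eauto. apply ceq_refl.
    + rewrite E; reflexivity.
    + lia.
  - rewrite apply_L_snoc in H |- *. rewrite length_app; simpl. rewrite Nat.add_1_r.
    apply inv_sub in H as (G1 & G2 & Lv & N1 & W1 & N2 & W2 & T1 & T2 & NLv & SMv & E & -> & ->).
    destruct (IH _ _ _ _ _ T1 (lift u) _ _ _ _ (lift_tys _ _ _ _ _ Hu) NL SM)
      as (G1' & N1' & W1' & T1' & E1 & HN).
    rewrite liftn_lift in T1'.
    exists (cplus (ctail G1') G2), (N1' + N2), (W1' + jump_weight (length Lv) + B * W2);
      repeat split.
    + econstructor; eauto. eapply subm_perm_l; [|exact SMv]. rewrite (E1 0). unfold cplus; simpl.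
      rewrite app_nil_r; reflexivity. apply ceq_refl.
    + rewrite E, E1. intro n; unfold cplus, ctail; simpl. perm_solve.
    + lia.
Qed.

Lemma dB_sr t L u G s N W :
  ty G (App (apply_L (Lam t) L) u) s N W ->
  smaller_typing G (apply_L (Sub t (liftn (length L) u)) L) s N W.
Proof.
  intro H.
  apply inv_app in H as (G1 & G2 & M & Lu & N1 & W1 & N2 & W2 & T1 & T2 & NL & SM & E & -> & ->).
  destruct (dB_ty _ _ _ _ _ _ _ T1 _ _ _ _ _ T2 NL SM) as (G' & N' & W' & T' & E' & HN).
  exists G', N', W'; repeat split; auto.
  - apply csubm_ceq. rewrite E, E'; reflexivity.
  - left; lia.
Qed.

(* Rule w: the erased argument was typed at least once, so the size decreases. *)
Lemma w_sr t u G s N W : ty G (Sub (lift t) u) s N W -> smaller_typing G t s N W.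
Proof.
  intro H.
  apply inv_sub in H as (G1 & G2 & L & N1 & W1 & N2 & W2 & T1 & T2 & NL & SM & E & -> & ->).
  apply lift_ty_inv in T1 as (D & T & ED).
  exists D, N1, W1; repeat split; auto.
  - intro n. exists (G2 n). rewrite (E n); unfold cplus, ctail. rewrite (ED (S n)); reflexivity.
  - left. pose proof (tys_length _ _ _ _ _ T2). destruct L; [congruence|]. simpl in *; lia.
Qed.

(* Rule d, by the substitution lemma: the copies of u typed for the occurrences of x
   replace them, the others (at least one when x does not occur) are discarded.  The
   argument does not need |t|_x = 1. *)
Lemma d_sr t u G s N W : ty G (Sub t u) s N W -> smaller_typing G (subst0 t u) s N W.
Proof.
  intro H.
  apply inv_sub in H as (G1 & G2 & L & N1 & W1 & N2 & W2 & T1 & T2 & NL & SM & E & -> & ->).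
  destruct SM as [R PR]. apply (tys_perm _ _ PR) in T2.
  apply tys_split in T2 as (D1 & D2 & Na & Nb & Wa & Wb & Ta & Tb & ED & -> & ->).
  destruct (subst_ty u t 0 G1 s N1 W1 D1 Na Wa T1 Ta) as (G' & N' & W' & T' & E' & HN).
  rewrite subst0_at. exists G', N', W'; repeat split; auto.
  - intro n. exists (D2 n). rewrite (E' n), (E n). unfold cplus; rewrite (ED n).
    unfold cplus, dropk, shiftc, ctail; simpl. rewrite Nat.sub_0_r. perm_solve.
  - left. pose proof (tys_length _ _ _ _ _ Tb). pose proof (Permutation_length PR).
    rewrite length_app in *. destruct L; [congruence|]. simpl in *; lia.
Qed.

(* Rule c: the copies of u are shared between the two jumps; the size is unchanged and
   the weight decreases since [jump_weight (a + b) > jump_weight a + jump_weight b]. *)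
Lemma c_sr t t' u G s N W :
  split_occ 0 t t' -> 1 <= occ 0 t' -> 1 <= occ 1 t' -> ty G (Sub t u) s N W ->
  smaller_typing G (Sub (Sub t' (lift u)) u) s N W.
Proof.
  intros Hs H1 H2 H.
  apply inv_sub in H as (G1 & G2 & L & N1 & W1 & N2 & W2 & T1 & T2 & NL & SM & E & -> & ->).
  destruct (split_ty 0 t t' Hs _ _ _ _ T1) as (G1' & (SA & _ & SC) & T1').
  pose proof (occ_ty t' 0 _ _ _ _ T1') as O0. pose proof (occ_ty t' 1 _ _ _ _ T1') as O1.
  destruct SM as [R PR].
  assert (PL : Permutation L ((G1' 0 ++ R) ++ G1' 1)) by (rewrite PR, <- SA; perm_solve).
  apply (tys_perm _ _ PL) in T2.
  apply tys_split in T2 as (Da & Db & Na & Nb & Wa & Wb & Ta & Tb & ED & -> & ->).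
  assert (NL1 : G1' 0 ++ R <> []) by (destruct (G1' 0); simpl in *; [lia|congruence]).
  assert (NL2 : G1' 1 <> []) by (destruct (G1' 1); simpl in *; [lia|congruence]).
  exists (cplus (ctail (cplus (ctail G1') (scons [] Da))) Db), ((N1 + Na) + Nb),
    ((W1 + jump_weight (length (G1' 0 ++ R)) + B * Wa) + jump_weight (length (G1' 1)) + B * Wb);
    repeat split.
  - econstructor. econstructor. exact T1'. apply lift_tys; exact Ta. exact NL1. apply subm_appr.
    apply ceq_refl. exact Tb. exact NL2. unfold cplus, ctail; simpl. rewrite app_nil_r.
    apply subm_refl. apply ceq_refl.
  - apply csubm_ceq. rewrite E, ED. intro n; unfold cplus, ctail; simpl.
    rewrite (SC (S n)) by lia. perm_solve.
  - right; split. lia. pose proof (Permutation_length PL). rewrite !length_app in *.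
    destruct (G1' 0), (G1' 1); simpl in *; try lia. unfold jump_weight. nia.
Qed.

(* The out-rules keep the size and move a jump out of a context multiplying its weight
   by B; for rule out3 (and out4) the copies of the jump are merged into one, which costs
   at most [jump_weight N], paid for by [B > 3N]. *)
Lemma out1_sr t u G s N W : 2 <= B -> ty G (Lam (Sub t (lift u))) s N W ->
  smaller_typing G (Sub (Lam (rename swap01 t)) u) s N W.
Proof.
  intros HB H.
  apply inv_lam in H as (Gb & M & s' & N0 & W0 & -> & Tb & Sb & E & -> & ->).
  apply inv_sub in Tb as (G1 & G2 & L & N1 & W1 & N2 & W2 & T1 & T2 & NL & SM & E1 & -> & ->).
  apply lift_tys_inv in T2 as (D & T2 & ED).
  exists (cplus (ctail (ctail (cswap G1))) D), (S N1 + N2),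
    (B * W1 + jump_weight (length L) + B * W2); repeat split.
  - econstructor. econstructor. apply swap_ty; exact T1.
    eapply subm_perm_l; [|exact Sb]. rewrite (E1 0). unfold cplus; rewrite (ED 0).
    unfold cplus, ctail, cswap; simpl. rewrite app_nil_r; reflexivity. apply ceq_refl.
    exact T2. exact NL. exact SM. apply ceq_refl.
  - apply csubm_ceq. rewrite E, E1, ED. intro n; unfold cplus, ctail, cswap; simpl. reflexivity.
  - right. split. lia. pose proof (jump_weight_ge2 (length L)). destruct L; [congruence|].
    simpl length in *. nia.
Qed.

Lemma out2_sr t u v G s N W : 2 <= B -> ty G (App (Sub t u) v) s N W ->
  smaller_typing G (Sub (App t (lift v)) u) s N W.
Proof.
  intros HB H.
  apply inv_app in H as (G1 & G2 & M & Lv & N1 & W1 & N2 & W2 & T1 & T2 & NL & SM & E & -> & ->).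
  apply inv_sub in T1 as (Gt & Gu & L & Nt & Wt & Nu & Wu & Tt & Tu & NLu & SMu & E1 & -> & ->).
  exists (cplus (ctail (cplus Gt (scons [] G2))) Gu), (S (Nt + N2) + Nu),
    (B * (Wt + W2) + jump_weight (length L) + B * Wu); repeat split.
  - econstructor. econstructor. exact Tt. apply lift_tys; exact T2. exact NL. exact SM.
    apply ceq_refl. exact Tu. exact NLu. eapply subm_perm_l; [|exact SMu].
    unfold cplus; simpl; rewrite app_nil_r; reflexivity. apply ceq_refl.
  - apply csubm_ceq. rewrite E, E1. intro n; unfold cplus, ctail; simpl. perm_solve.
  - right. split. lia. pose proof (jump_weight_ge2 (length L)). destruct L; [congruence|].
    simpl length in *. nia.
Qed.

Lemma out3_sr t u v G s N W : 3 * N + 1 <= B -> ty G (App t (Sub v u)) s N W ->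
  smaller_typing G (Sub (App (lift t) v) u) s N W.
Proof.
  intros HB H.
  apply inv_app in H as (Gt & G2 & M & L & Nt & Wt & N2 & W2 & Tt & T2 & NL & SM & E & -> & ->).
  apply tys_sub_inv in T2
    as (Gv & Gu & Lu & Nv & Wv & Nu & Wu & Wc & Tv & Tu & SMu & E2 & -> & -> & HL).
  destruct (HL NL) as [NLu HWc].
  exists (cplus (ctail (cplus (scons [] Gt) Gv)) Gu), (S (Nt + Nv) + Nu),
    (B * (Wt + Wv) + jump_weight (length Lu) + B * Wu); repeat split.
  - econstructor. econstructor. apply lift_ty; exact Tt. exact Tv. exact NL. exact SM.
    apply ceq_refl. exact Tu. exact NLu. unfold cplus; simpl; exact SMu. apply ceq_refl.
  - apply csubm_ceq. rewrite E, E2. intro n; unfold cplus, ctail; simpl. perm_solve.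
  - right. split. lia. pose proof (tys_length _ _ _ _ _ Tu). unfold jump_weight.
    assert (B * Wc >= B) by nia. assert (B * (B * Wu) >= B * Wu) by nia. nia.
Qed.

Lemma out4_sr t u v G s N W : 3 * N + 1 <= B -> ty G (Sub t (Sub v u)) s N W ->
  smaller_typing G (Sub (Sub (rename (upren S) t) v) u) s N W.
Proof.
  intros HB H.
  apply inv_sub in H as (Gt & G2 & Ly & Nt & Wt & N2 & W2 & Tt & T2 & NL & SM & E & -> & ->).
  apply tys_sub_inv in T2
    as (Gv & Gu & Lu & Nv & Wv & Nu & Wu & Wc & Tv & Tu & SMu & E2 & -> & -> & HL).
  destruct (HL NL) as [NLu HWc].
  exists (cplus (ctail (cplus (ctail (cins1 Gt)) Gv)) Gu), ((Nt + Nv) + Nu),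
    ((Wt + jump_weight (length Ly) + B * Wv) + jump_weight (length Lu) + B * Wu); repeat split.
  - econstructor. econstructor. apply uprenS_ty; exact Tt. exact Tv. exact NL. exact SM.
    apply ceq_refl. exact Tu. exact NLu. unfold cplus, ctail; simpl; exact SMu. apply ceq_refl.
  - apply csubm_ceq. rewrite E, E2. intro n; unfold cplus, ctail; simpl. perm_solve.
  - right. split. lia. pose proof (tys_length _ _ _ _ _ Tu). unfold jump_weight.
    assert (B * Wc >= B) by nia. assert (B * (B * Wu) >= B * Wu) by nia. nia.
Qed.

Lemma out_root_decreasing t t' : out_root t t' -> decreasing t t'.
Proof.
  intros R G s N W H HB. pose proof (ty_size_pos _ _ _ _ _ H).
  destruct R as [t L u|t u|t u _|t t' u _ Hs H1 H2|t u|t u v|t u v|t u v].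
  - exact (dB_sr _ _ _ _ _ _ _ H).
  - exact (w_sr _ _ _ _ _ _ H).
  - exact (d_sr _ _ _ _ _ _ H).
  - exact (c_sr _ _ _ _ _ _ _ Hs H1 H2 H).
  - apply out1_sr; auto; lia.
  - apply out2_sr; auto; lia.
  - apply out3_sr; auto.
  - apply out4_sr; auto.
Qed.

Definition lex_le (N' W' N W : nat) := lex_lt N' W' N W \/ (N' = N /\ W' = W).

Lemma tys_sr u u' : decreasing u u' ->
  forall G L N W, tys G u L N W -> 3 * N + 1 <= B ->
    exists G' N' W', tys G' u' L N' W' /\ csubm G' G /\ lex_le N' W' N W /\
      (L <> [] -> lex_lt N' W' N W).
Proof.
  intros Hu G L N W H. induction H as [G u0 E|G Ga Gb u0 s L N1 W1 N2 W2 T R IH E]; intro HB.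
  - exists cempty, 0, 0; repeat split. apply tys_nil, ceq_refl. apply csubm_empty.
    right; auto. congruence.
  - destruct (Hu _ _ _ _ T) as (Ga' & Na' & Wa' & Ta & Sa & La); [lia|].
    destruct IH as (Gb' & Nb' & Wb' & Tb & Sb & Lb & _); [auto|lia|].
    exists (cplus Ga' Gb'), (Na' + Nb'), (Wa' + Wb'); repeat split.
    + econstructor; eauto. apply ceq_refl.
    + eapply csubm_ceq_r; [apply csubm_plus; eauto|]. symmetry; auto.
    + unfold lex_le, lex_lt in *; lia.
    + unfold lex_le, lex_lt in *; lia.
Qed.

(* Decreasing steps are closed under the term constructors; below an abstraction or in
   the body of a jump the context of the bound variable can only shrink. *)
Lemma decreasing_lam t t' : decreasing t t' -> decreasing (Lam t) (Lam t').
Proof.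
  intros IH G s N W H HB.
  apply inv_lam in H as (Gb & M & s' & N0 & W0 & -> & Tb & Sb & E & -> & ->).
  destruct (IH _ _ _ _ Tb) as (Gb' & N' & W' & T' & S' & L'); [lia|].
  exists (ctail Gb'), (S N'), (B * W'); repeat split.
  - econstructor; eauto. eapply subm_trans; eauto. apply ceq_refl.
  - eapply csubm_ceq_r; [apply csubm_tail; eauto|]. symmetry; auto.
  - destruct L' as [?|[? ?]]; unfold lex_lt; [left; lia|right; split; [lia|nia]].
Qed.

Lemma decreasing_appl t t' u : decreasing t t' -> decreasing (App t u) (App t' u).
Proof.
  intros IH G s N W H HB.
  apply inv_app in H as (G1 & G2 & M & L & N1 & W1 & N2 & W2 & T1 & T2 & NL & SM & E & -> & ->).
  destruct (IH _ _ _ _ T1) as (G1' & N' & W' & T' & S' & L'); [lia|].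
  exists (cplus G1' G2), (S (N' + N2)), (B * (W' + W2)); repeat split.
  - econstructor; eauto. apply ceq_refl.
  - eapply csubm_ceq_r; [apply csubm_plus; eauto using csubm_refl|]. symmetry; auto.
  - destruct L' as [?|[? ?]]; unfold lex_lt; [left; lia|right; split; [lia|nia]].
Qed.

Lemma decreasing_appr u t t' : decreasing t t' -> decreasing (App u t) (App u t').
Proof.
  intros IH G s N W H HB.
  apply inv_app in H as (G1 & G2 & M & L & N1 & W1 & N2 & W2 & T1 & T2 & NL & SM & E & -> & ->).
  destruct (tys_sr t t' IH _ _ _ _ T2) as (G2' & N' & W' & T' & S' & _ & L'); [lia|].
  specialize (L' NL).
  exists (cplus G1 G2'), (S (N1 + N')), (B * (W1 + W')); repeat split.
  - econstructor; eauto. apply ceq_refl.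
  - eapply csubm_ceq_r; [apply csubm_plus; eauto using csubm_refl|]. symmetry; auto.
  - destruct L' as [?|[? ?]]; unfold lex_lt; [left; lia|right; split; [lia|nia]].
Qed.

Lemma decreasing_subl t t' u : decreasing t t' -> decreasing (Sub t u) (Sub t' u).
Proof.
  intros IH G s N W H HB.
  apply inv_sub in H as (G1 & G2 & L & N1 & W1 & N2 & W2 & T1 & T2 & NL & SM & E & -> & ->).
  destruct (IH _ _ _ _ T1) as (G1' & N' & W' & T' & S' & L'); [lia|].
  exists (cplus (ctail G1') G2), (N' + N2), (W' + jump_weight (length L) + B * W2);
    repeat split.
  - econstructor; [exact T'|exact T2|exact NL|eapply subm_trans; [apply S'|exact SM]|].
    apply ceq_refl.
  - eapply csubm_ceq_r; [apply csubm_plus; [apply csubm_tail, S' | apply csubm_refl]|].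
    symmetry; auto.
  - destruct L' as [?|[? ?]]; unfold lex_lt; [left; lia|right; split; [lia|nia]].
Qed.

Lemma decreasing_subr u t t' : decreasing t t' -> decreasing (Sub u t) (Sub u t').
Proof.
  intros IH G s N W H HB.
  apply inv_sub in H as (G1 & G2 & L & N1 & W1 & N2 & W2 & T1 & T2 & NL & SM & E & -> & ->).
  destruct (tys_sr t t' IH _ _ _ _ T2) as (G2' & N' & W' & T' & S' & _ & L'); [lia|].
  specialize (L' NL).
  exists (cplus (ctail G1) G2'), (N1 + N'), (W1 + jump_weight (length L) + B * W');
    repeat split.
  - econstructor; eauto. apply ceq_refl.
  - eapply csubm_ceq_r; [apply csubm_plus; eauto using csubm_refl|]. symmetry; auto.
  - destruct L' as [?|[? ?]]; unfold lex_lt; [left; lia|right; split; [lia|nia]].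
Qed.

Lemma red_jout_decreasing t t' : red_jout t t' -> decreasing t t'.
Proof.
  induction 1.
  - apply out_root_decreasing; auto.
  - apply decreasing_lam; auto.
  - apply decreasing_appl; auto.
  - apply decreasing_appr; auto.
  - apply decreasing_subl; auto.
  - apply decreasing_subr; auto.
Qed.

(* The CS equation only permutes the two jumps: typings are preserved with the same
   measures, in both directions (the relation is symmetric). *)
Lemma cs_root_ty t t' : cs_root t t' -> forall G s N W, ty G t s N W ->
  exists G', ty G' t' s N W /\ ceq G' G.
Proof.
  destruct 1 as [t u v]; intros G s N W H.
  apply inv_sub in H as (G1 & G2 & Lv & N1 & W1 & N2 & W2 & T1 & T2 & NLv & SMv & E & -> & ->).
  apply inv_sub in T1 as (Gt & G3 & Ls & Nt & Wt & Ns & Ws & Tt & T3 & NLs & SMs & E1 & -> & ->).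
  apply lift_tys_inv in T3 as (Ds & T3 & ED).
  exists (cplus (ctail (cplus (ctail (cswap Gt)) (scons [] G2))) Ds). split.
  - eapply ty_eq. econstructor. econstructor. apply swap_ty; exact Tt. apply lift_tys; exact T2.
    exact NLv. eapply subm_perm_l; [|exact SMv]. rewrite (E1 0). unfold cplus; rewrite (ED 0).
    unfold cplus, ctail, cswap; simpl; rewrite app_nil_r; reflexivity. apply ceq_refl.
    exact T3. exact NLs. unfold cplus, ctail, cswap; simpl. rewrite app_nil_r; exact SMs.
    apply ceq_refl. lia. lia.
  - rewrite E, E1, ED. intro n; unfold cplus, ctail, cswap; simpl. perm_solve.
Qed.

Lemma ctx_cs_ty t t' : ctx cs_root t t' -> forall G s N W, ty G t s N W ->
  exists G', ty G' t' s N W /\ ceq G' G.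
Proof.
  assert (Htys : forall u u', (forall G s N W, ty G u s N W -> exists G', ty G' u' s N W /\ ceq G' G) ->
            forall G L N W, tys G u L N W -> exists G', ceq G' G /\ tys G' u' L N W).
  { intros u u' IH. apply (tys_transport (fun X Y => ceq Y X)).
    - intros A C A' X1 X2; rewrite X2; symmetry; exact X1.
    - reflexivity.
    - intros ? ? ? ? X1 X2; rewrite X1, X2; reflexivity.
    - intros ? ? ? ? X1; destruct (IH _ _ _ _ X1) as (? & ? & ?); eauto. }
  induction 1 as [t t' Hr|t t' Hc IH|t t' u Hc IH|u t t' Hc IH|t t' u Hc IH|u t t' Hc IH];
    intros G s N W H.
  - eapply cs_root_ty; eauto.
  - apply inv_lam in H as (Gb & M & s' & N0 & W0 & -> & Tb & Sb & E & -> & ->).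
    destruct (IH _ _ _ _ Tb) as (Gb' & T' & E').
    exists (ctail Gb'); split. econstructor; eauto. eapply subm_perm_l; [|exact Sb].
    symmetry; apply E'. apply ceq_refl. rewrite E, E'; reflexivity.
  - apply inv_app in H as (G1 & G2 & M & L & N1 & W1 & N2 & W2 & T1 & T2 & NL & SM & E & -> & ->).
    destruct (IH _ _ _ _ T1) as (G1' & T' & E').
    exists (cplus G1' G2); split. econstructor; eauto. apply ceq_refl. rewrite E, E'; reflexivity.
  - apply inv_app in H as (G1 & G2 & M & L & N1 & W1 & N2 & W2 & T1 & T2 & NL & SM & E & -> & ->).
    destruct (Htys _ _ IH _ _ _ _ T2) as (G2' & E' & T').
    exists (cplus G1 G2'); split. econstructor; eauto. apply ceq_refl. rewrite E, E'; reflexivity.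
  - apply inv_sub in H as (G1 & G2 & L & N1 & W1 & N2 & W2 & T1 & T2 & NL & SM & E & -> & ->).
    destruct (IH _ _ _ _ T1) as (G1' & T' & E').
    exists (cplus (ctail G1') G2); split. econstructor; eauto. eapply subm_perm_l; [|exact SM].
    symmetry; apply E'. apply ceq_refl. rewrite E, E'; reflexivity.
  - apply inv_sub in H as (G1 & G2 & L & N1 & W1 & N2 & W2 & T1 & T2 & NL & SM & E & -> & ->).
    destruct (Htys _ _ IH _ _ _ _ T2) as (G2' & E' & T').
    exists (cplus (ctail G1) G2'); split. econstructor; eauto. apply ceq_refl.
    rewrite E, E'; reflexivity.
Qed.

Lemma cs_eq_ty t t' : cs_eq t t' ->
  (forall G s N W, ty G t s N W -> exists G', ty G' t' s N W) /\
  (forall G s N W, ty G t' s N W -> exists G', ty G' t s N W).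
Proof.
  induction 1 as [a b H|a|a b H [IH1 IH2]|a b c H1 [IH1 IH2] H2 [IH3 IH4]];
    split; intros G s N W T; eauto.
  - destruct (ctx_cs_ty _ _ H _ _ _ _ T) as (G' & T' & _); eauto.
  - apply ctx_sym in H; [|apply cs_root_sym].
    destruct (ctx_cs_ty _ _ H _ _ _ _ T) as (G' & T' & _); eauto.
  - destruct (IH1 _ _ _ _ T) as (G1 & T1). eauto.
  - destruct (IH4 _ _ _ _ T) as (G1 & T1). eauto.
Qed.

Theorem SN_of_ty : forall N W t G s, ty G t s N W -> 3 * N + 1 <= B -> SN red_jout_mod t.
Proof.
  intros N. induction N as [N IHN] using (well_founded_induction lt_wf).
  intros W. induction W as [W IHW] using (well_founded_induction lt_wf).
  intros t G s T HB. constructor. intros t' (t1 & t2 & E1 & R & E2).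
  destruct (proj1 (cs_eq_ty _ _ E1) _ _ _ _ T) as (G1 & T1).
  destruct (red_jout_decreasing _ _ R _ _ _ _ T1 HB) as (G2 & N' & W' & T2 & _ & L).
  destruct (proj1 (cs_eq_ty _ _ E2) _ _ _ _ T2) as (G3 & T3).
  destruct L as [L|[-> L]].
  - eapply (IHN N' L W'); eauto. lia.
  - eapply (IHW W' L); eauto.
Qed.

End Typing.

(* β-strong normalisation of a λ-term yields a well-founded order combining β-reduction
   and the immediate-subterm relation: the induction principle for subject expansion. *)
Inductive immediate_subterm : term -> term -> Prop :=
| is_lam t : immediate_subterm t (Lam t)
| is_appl t u : immediate_subterm t (App t u)
| is_appr t u : immediate_subterm u (App t u)
| is_subl t u : immediate_subterm t (Sub t u)
| is_subr t u : immediate_subterm u (Sub t u).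

Definition subterm : term -> term -> Prop := clos_refl_trans_1n _ immediate_subterm.

Definition beta_or_subterm (x y : term) : Prop := red_beta y x \/ immediate_subterm x y.

Lemma immediate_subterm_red s s' x : immediate_subterm s s' -> red_beta s x ->
  exists y, red_beta s' y /\ immediate_subterm x y.
Proof.
  destruct 1; intro H; eexists; split;
    [apply c_lam; exact H|constructor|apply c_appl; exact H|constructor
    |apply c_appr; exact H|constructor|apply c_subl; exact H|constructor
    |apply c_subr; exact H|constructor].
Qed.

Lemma subterm_red s t : subterm s t -> forall x, red_beta s x ->
  exists t', red_beta t t' /\ subterm x t'.
Proof.
  induction 1 as [t|s s' t Hi Hs IH]; intros x Hr.
  - exists x; split; auto. constructor.
  - destruct (immediate_subterm_red _ _ _ Hi Hr) as (y & Hy & Hiy).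
    destruct (IH _ Hy) as (t' & Ht & Hst).
    exists t'; split; auto. econstructor; eauto.
Qed.

Lemma SN_beta_subterm_acc t : SN red_beta t -> forall s, subterm s t -> Acc beta_or_subterm s.
Proof.
  induction 1 as [t _ IHt]. intro s. induction s; intro Hs; constructor; intros x [Hr|Hi].
  all: try (destruct (subterm_red _ _ Hs _ Hr) as (t' & Ht & Hx); eapply IHt; eauto).
  all: inversion Hi; subst;
    match goal with H : _ -> Acc _ ?y |- Acc _ ?y => apply H; econstructor; [constructor|exact Hs] end.
Qed.

Definition apps (h : term) (args : list term) := fold_left App args h.

Lemma apps_snoc h args a : apps h (args ++ [a]) = App (apps h args) a.
Proof. unfold apps; rewrite fold_left_app; reflexivity. Qed.

Lemma lambda_term_shape t : is_lambda t ->
  (exists n args, t = apps (Var n) args) \/ (exists b, t = Lam b) \/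
  (exists b a args, t = apps (Lam b) (a :: args)).
Proof.
  induction t; simpl; intro H.
  - left; exists n, []; reflexivity.
  - right; left; eauto.
  - destruct H as [H1 H2].
    destruct (IHt1 H1) as [(n & args & ->)|[(b & ->)|(b & a & args & ->)]].
    + left; exists n, (args ++ [t2]); rewrite apps_snoc; auto.
    + right; right; exists b, t2, []; reflexivity.
    + right; right; exists b, a, (args ++ [t2]).
      change (a :: args ++ [t2]) with ((a :: args) ++ [t2]). rewrite apps_snoc; auto.
  - contradiction.
Qed.

Lemma is_lambda_apps h args : is_lambda (apps h args) <-> is_lambda h /\ Forall is_lambda args.
Proof.
  induction args as [|a args IH] using rev_ind; simpl.
  - split; [intro H; split; [exact H|constructor] | intros [H _]; exact H].
  - rewrite apps_snoc, Forall_app, Forall_cons_iff; simpl. rewrite IH.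
    split; [intros [[? ?] ?]; repeat split; auto | intros (? & ? & ? & _); auto].
Qed.

Lemma apps_arg_sub h args a : In a args -> clos_trans _ beta_or_subterm a (apps h args).
Proof.
  induction args as [|x args IH] using rev_ind; intro H. destruct H.
  rewrite apps_snoc. apply in_app_or in H as [H|[H|[]]].
  - eapply t_trans. apply IH, H. apply t_step; right; constructor.
  - subst; apply t_step; right; constructor.
Qed.

Lemma red_apps X Y args : red_beta X Y -> red_beta (apps X args) (apps Y args).
Proof. induction args as [|x args IH] using rev_ind; intro H; [exact H|].
  rewrite !apps_snoc; apply c_appl; apply IH, H. Qed.

Lemma rename_lambda f t : is_lambda t -> is_lambda (rename f t).
Proof. revert f; induction t; simpl; intros f H; auto. destruct H; split; auto. Qed.

Lemma subst_lambda k u t : is_lambda u -> is_lambda t -> is_lambda (subst_at k u t).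
Proof.
  revert k; induction t; simpl; intros k Hu H; auto.
  - destruct (Nat.ltb n k); [exact I|]. destruct (Nat.eqb n k); [|exact I].
    clear -Hu; induction k; simpl; auto. apply rename_lambda; auto.
  - destruct H; split; auto.
Qed.

Section Expansion.
Variable B : nat.

Definition typable (t : term) := exists G s N W, ty B G t s N W.

(* A variable applied to typable arguments is typable, with any result type: each
   argument is typed once and consumed by an empty multiset of types. *)
Lemma neutral_ty n args : Forall typable args ->
  forall s, exists G N W, ty B G (apps (Var n) args) s N W.
Proof.
  induction args as [|a args IH] using rev_ind; intros H s.
  - exists (csingle n [s]), 1, 0; constructor; apply ceq_refl.
  - apply Forall_app in H as [H1 H2]. inversion H2 as [|? ? (Ga & sa & Na & Wa & Ta) _]; subst.
    destruct (IH H1 (Arr [] s)) as (G1 & N1 & W1 & T1). rewrite apps_snoc.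
    do 3 eexists. econstructor. exact T1. apply tys_one; exact Ta. congruence. apply subm_nil.
    apply ceq_refl.
Qed.

Lemma expand_under_apps a b args :
  (forall G s N W, ty B G a s N W -> exists G' N' W', ty B G' b s N' W') ->
  forall G s N W, ty B G (apps a args) s N W -> exists G' N' W', ty B G' (apps b args) s N' W'.
Proof.
  intro Hab; induction args as [|x args IH] using rev_ind; intros G s N W H; [simpl in *; eauto|].
  rewrite apps_snoc in *.
  apply inv_app in H as (G1 & G2 & M & L & N1 & W1 & N2 & W2 & T1 & T2 & NL & SM & E & -> & ->).
  destruct (IH _ _ _ _ T1) as (G1' & N1' & W1' & T1').
  do 3 eexists; econstructor; eauto. apply ceq_refl.
Qed.

(* β-expansion preserves typability, provided the argument is typable: by
   anti-substitution, or by typing the argument once when it is erased. *)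
Lemma beta_expansion_ty b a : typable a -> forall G s N W, ty B G (subst0 b a) s N W ->
  exists G' N' W', ty B G' (App (Lam b) a) s N' W'.
Proof.
  intros (Ga & sa & Na & Wa & Ta) G s N W H. rewrite subst0_at in H.
  apply antisubst_ty in H as (Gt & D & N0 & W0 & Nu & Wu & Tt & Tu & E).
  destruct (Gt 0) as [|x l] eqn:Eg.
  - do 3 eexists. econstructor. econstructor. exact Tt. rewrite Eg; apply subm_refl.
    apply ceq_refl. apply tys_one; exact Ta. congruence. apply subm_nil. apply ceq_refl.
  - do 3 eexists. econstructor. econstructor. exact Tt. apply subm_refl. apply ceq_refl.
    exact Tu. congruence. rewrite Eg; apply subm_refl. apply ceq_refl.
Qed.

Lemma typable_acc t : Acc beta_or_subterm t -> is_lambda t -> typable t.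
Proof.
  intro H. apply Acc_clos_trans in H. induction H as [t _ IH]. intro Hl.
  destruct (lambda_term_shape t Hl) as [(n & args & ->)|[(b & ->)|(b & a & args & ->)]].
  - apply is_lambda_apps in Hl as [_ Ha].
    destruct (neutral_ty n args) with (s := Base) as (G & N & W & T).
    + apply Forall_forall; intros a Hin. apply IH. apply apps_arg_sub; auto.
      rewrite Forall_forall in Ha; auto.
    + exists G, Base, N, W; auto.
  - simpl in Hl. destruct (IH b) as (G & s & N & W & T); auto. apply t_step; right; constructor.
    exists (ctail G), (Arr (G 0) s), (S N), (B * W). econstructor; eauto. apply subm_refl.
    apply ceq_refl.
  - apply is_lambda_apps in Hl as [Hb Hargs]. inversion Hargs as [|? ? Ha Hargs']; subst.
    change (apps (Lam b) (a :: args)) with (apps (App (Lam b) a) args) in *.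
    assert (Hred : clos_trans _ beta_or_subterm (apps (subst0 b a) args)
                     (apps (App (Lam b) a) args)).
    { apply t_step; left. apply red_apps. apply c_root. constructor. }
    assert (Hl' : is_lambda (apps (subst0 b a) args)).
    { apply is_lambda_apps; split; auto. rewrite subst0_at; apply subst_lambda; auto. }
    destruct (IH _ Hred Hl') as (G & s & N & W & T).
    assert (Hta : typable a) by (apply IH; auto; apply (apps_arg_sub (Lam b) (a :: args)); left; auto).
    destruct (expand_under_apps _ _ args (beta_expansion_ty b a Hta) _ _ _ _ T)
      as (G' & N' & W' & T').
    exists G', s, N', W'; auto.
Qed.

Lemma SN_typable t : SN red_beta t -> is_lambda t -> typable t.
Proof. intros H Hl. apply typable_acc; auto. apply (SN_beta_subterm_acc t H). constructor. Qed.
End Expansion.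

Lemma ty_change_multiplier B B' t : forall G s N W, ty B G t s N W -> exists W', ty B' G t s N W'.
Proof.
  assert (Htys : forall u, (forall G s N W, ty B G u s N W -> exists W', ty B' G u s N W') ->
            forall G L N W, tys B G u L N W -> exists W', tys B' G u L N W').
  { intros u Hu G L N W H; induction H as [G u0 E|G Ga Gb u0 s L N1 W1 N2 W2 T R IH E].
    - exists 0; apply tys_nil; auto.
    - destruct (Hu _ _ _ _ T) as (Wa & Ta). destruct (IH Hu) as (Wb & Tb).
      exists (Wa + Wb); econstructor; eauto. }
  induction t; intros G s N W H.
  - apply inv_var in H as (E & -> & ->). exists 0; constructor; auto.
  - apply inv_lam in H as (Gb & M & s' & N0 & W0 & -> & Tb & Sb & E & -> & ->).
    destruct (IHt _ _ _ _ Tb) as (W' & T'). eexists; econstructor; eauto.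
  - apply inv_app in H as (G1 & G2 & M & L & N1 & W1 & N2 & W2 & T1 & T2 & NL & SM & E & -> & ->).
    destruct (IHt1 _ _ _ _ T1) as (W1' & T1'). destruct (Htys t2 IHt2 _ _ _ _ T2) as (W2' & T2').
    eexists; econstructor; eauto.
  - apply inv_sub in H as (G1 & G2 & L & N1 & W1 & N2 & W2 & T1 & T2 & NL & SM & E & -> & ->).
    destruct (IHt1 _ _ _ _ T1) as (W1' & T1'). destruct (Htys t2 IHt2 _ _ _ _ T2) as (W2' & T2').
    eexists; econstructor; eauto.
Qed.

Theorem corollary55 :
  forall t : term, is_lambda t -> SN red_beta t -> SN red_jout_mod t.
Proof.
  intros t Hl Hs.
  destruct (SN_typable 0 t Hs Hl) as (G & s & N & W & T).
  destruct (ty_change_multiplier 0 (3 * N + 1) t _ _ _ _ T) as (W' & T').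
  exact (SN_of_ty (3 * N + 1) N W' t G s T' (le_n _)).
Qed.
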